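(* Consider the sub-$\ell^\infty$ structure on $\mathbb{R}^3$ defined by $X_1=\partial_x-\tfrac{y}{2}\partial_z$, $X_2=\partial_y+\tfrac{x}{2}\partial_z$. If an extremal pair $(\lambda,\gamma)$ on $[0,T]$ has a regular arc, then $\gamma$ is a regular bang-bang trajectory. Moreover, there is $s>0$ such that all its arcs have length (duration) $s$, except possibly the first and the last arc, whose lengths are at most $s$ (in the case $\langle\lambda,\partial_z\rangle\equiv0$ the trajectory consists of a single regular arc). At consecutive junctions between regular arcs, the components $u_1$ and $u_2$ of the control change sign alternately (at each junction exactly one component changes sign, and the component that changes sign alternates).
   Context: Sub-$\ell^\infty$ structure defined by smooth vector fields $X_1,\dots,X_k$ on a manifold $M$: an admissible trajectory is an absolutely continuous curve $\gamma:[0,T]\to M$ together with a measurable control $u=(u_1,\dots,u_k):[0,T]\to\mathbb{R}^k$ with $|u_i(t)|\le1$ for all $i$ and a.e. $t$, such that $\dot\gamma(t)=\sum_i u_i(t)X_i(\gamma(t))$ for a.e. $t$. An extremal pair is a pair $(\lambda,\gamma)$ where $\gamma$ is admissible with control $u$ and $\lambda:[0,T]\to T^*M$ is absolutely continuous with $\lambda(t)\in T^*_{\gamma(t)}M\setminus\{0\}$, such that, with $\mathcal H(\lambda,p,u)=\sum_i u_i\langle\lambda,X_i(p)\rangle$, in canonical coordinates $\dot\lambda=-\partial_p\mathcal H(\lambda,\gamma,u)$, $\dot\gamma=\partial_\lambda\mathcal H(\lambda,\gamma,u)$ a.e., and there is a constant $\lambda_0\ge0$ with $\sum_iu_i(t)\langle\lambda(t),X_i(\gamma(t))\rangle=\sum_i|\langle\lambda(t),X_i(\gamma(t))\rangle|=\lambda_0$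 for a.e. $t$; $\gamma$ is then an extremal trajectory and $\lambda$ an extremal lift. The switching functions are $\varphi_j(t)=\langle\lambda(t),X_j(\gamma(t))\rangle$. The restriction of an extremal pair to an open interval $I$ is a regular arc if $\varphi_j(t)\ne0$ for all $t\in I$ and all $j$; arcs are taken maximal (not contained in a strictly larger open interval with the same property). A regular bang-bang trajectory is an extremal trajectory with an extremal lift such that $[0,T]$ minus finitely many points is a finite union of maximal regular arcs (on each of which the control is then constant with values in $\{1,-1\}^k$); these are its arcs. *)

From Stdlib Require Import Reals Lra List.
Open Scope R_scope.

(* Points of R^3 and covectors (canonical coordinates of T^*R^3 = R^3 x R^3). *)
Definition R3 : Type := (R * R * R)%type.

Definition coord (k : nat) (p : R3) : R :=
  match p with (x, y, z) =>
    match k with 0%nat => x | 1%nat => y | _ => z end end.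

Definition setc (k : nat) (p : R3) (s : R) : R3 :=
  match p with (x, y, z) =>
    match k with 0%nat => (s, y, z) | 1%nat => (x, s, z) | _ => (x, y, s) end end.

Definition X1 (p : R3) : R3 := match p with (x, y, z) => (1, 0, - (y / 2)) end.
Definition X2 (p : R3) : R3 := match p with (x, y, z) => (0, 1, x / 2) end.

Definition pairing (l v : R3) : R :=
  match l, v with (a, b, c), (d, e, f) => a * d + b * e + c * f end.

Definition Ham (l p : R3) (u : R * R) : R :=
  fst u * pairing l (X1 p) + snd u * pairing l (X2 p).

(* Lebesgue-null subsets of R: coverable by countably many intervals of
   arbitrarily small total length. *)
Definition negligible (S : R -> Prop) : Prop :=
  forall eps, 0 < eps -> exists a b : nat -> R,
    (forall n, a n <= b n) /\
    (forall N, sum_f_R0 (fun n => b n - a n) N <= eps) /\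
    (forall x, S x -> exists n, a n < x < b n).

Definition ae_on (a b : R) (P : R -> Prop) : Prop :=
  negligible (fun t => a <= t <= b /\ ~ P t).

(* a <= c1 <= d1 <= c2 <= d2 <= ... <= b : finite families of
   non-overlapping subintervals [ci,di] of [a,b] *)
Fixpoint chain_in (a b : R) (l : list (R * R)) : Prop :=
  match l with
  | nil => a <= b
  | (c, d) :: l' => a <= c /\ c <= d /\ chain_in d b l'
  end.

Definition AC_on (a b : R) (f : R -> R) : Prop :=
  forall eps, 0 < eps -> exists delta, 0 < delta /\
    forall l, chain_in a b l ->
      fold_right (fun cd acc => (snd cd - fst cd) + acc) 0 l < delta ->
      fold_right (fun cd acc => Rabs (f (snd cd) - f (fst cd)) + acc) 0 l < eps.

(* canonical equations at time t:
   d/dt lambda_k = - dH/dp_k ,  d/dt gamma_k = dH/dlambda_k *)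
Definition hamiltonian_eqs (lam gam : R -> R3) (u : R -> R * R) (t : R) : Prop :=
  forall k, (k < 3)%nat ->
    (exists d, derivable_pt_lim
                 (fun s => Ham (lam t) (setc k (gam t) s) (u t)) (coord k (gam t)) d
               /\ derivable_pt_lim (fun s => coord k (lam s)) t (- d)) /\
    (exists d, derivable_pt_lim
                 (fun s => Ham (setc k (lam t) s) (gam t) (u t)) (coord k (lam t)) d
               /\ derivable_pt_lim (fun s => coord k (gam s)) t d).

Definition phi1 (lam gam : R -> R3) (t : R) : R := pairing (lam t) (X1 (gam t)).
Definition phi2 (lam gam : R -> R3) (t : R) : R := pairing (lam t) (X2 (gam t)).

Definition extremal_pair (T : R) (lam gam : R -> R3) (u : R -> R * R) : Prop :=
  (forall k, (k < 3)%nat -> AC_on 0 T (fun t => coord k (gam t))) /\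
  (forall k, (k < 3)%nat -> AC_on 0 T (fun t => coord k (lam t))) /\
  ae_on 0 T (fun t => Rabs (fst (u t)) <= 1 /\ Rabs (snd (u t)) <= 1) /\
  (forall t, 0 <= t <= T -> lam t <> (0, 0, 0)) /\
  ae_on 0 T (hamiltonian_eqs lam gam u) /\
  (exists lam0, 0 <= lam0 /\
     ae_on 0 T (fun t =>
        Ham (lam t) (gam t) (u t) = lam0 /\
        Rabs (phi1 lam gam t) + Rabs (phi2 lam gam t) = lam0)).

Definition regular_on (lam gam : R -> R3) (a b : R) : Prop :=
  forall t, a < t < b -> phi1 lam gam t <> 0 /\ phi2 lam gam t <> 0.

Definition maximal_regular_arc (T : R) (lam gam : R -> R3) (a b : R) : Prop :=
  0 <= a /\ a < b /\ b <= T /\ regular_on lam gam a b /\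
  forall a' b', 0 <= a' <= a -> b <= b' <= T -> regular_on lam gam a' b' ->
    a' = a /\ b' = b.

From Stdlib Require Import Reals Lra Lia List Classical ClassicalEpsilon Wf_nat.
Open Scope R_scope.

(* The z-component [p] of the covector is constant, and the switching functions
   [phi1 = lambda_x - p y / 2], [phi2 = lambda_y + p x / 2] are absolutely
   continuous with [phi1' = - p u2], [phi2' = p u1] a.e.  The maximum condition
   forces [u_i = sign phi_i] wherever [phi_i <> 0], and [|phi1| + |phi2| = lambda_0 > 0],
   so [(phi1, phi2)] runs along the l1-circle of radius [lambda_0] with speed [|p|],
   turning at every axis crossing.  Hence the zeros of [phi1 phi2] form an
   arithmetic progression of step [lambda_0 / |p|] (there are none if [p = 0]) at
   which [phi1] and [phi2] vanish alternately; between consecutive zeros the control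
   is a constant vertex of the square, and at each zero exactly the component whose
   switching function vanishes changes sign.  The analytic input is that an
   absolutely continuous function with a.e. vanishing derivative is constant,
   proved with Cousin's lemma. *)

(** * Negligible sets *)

Lemma negligible_subset (S S' : R -> Prop) :
  (forall x, S x -> S' x) -> negligible S' -> negligible S.
Proof.
  intros HS HS' eps Heps; destruct (HS' eps Heps) as [a [b [Hab [Hsum Hcov]]]].
  exists a, b; auto.
Qed.

Lemma sum_f_R0_le_add (h : nat -> R) M k :
  (forall n, 0 <= h n) -> sum_f_R0 h M <= sum_f_R0 h (M + k).
Proof.
  intros Hh; induction k as [|k IH].
  - rewrite Nat.add_0_r; lra.
  - rewrite Nat.add_succ_r; simpl; specialize (Hh (S (M + k))); lra.
Qed.

Definition interleave (a1 a2 : nat -> R) (n : nat) : R :=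
  if Nat.even n then a1 (Nat.div2 n) else a2 (Nat.div2 n).

Lemma interleave_double a1 a2 k : interleave a1 a2 (2 * k) = a1 k.
Proof. unfold interleave; rewrite Nat.even_even, Nat.div2_double; reflexivity. Qed.

Lemma interleave_succ_double a1 a2 k : interleave a1 a2 (S (2 * k)) = a2 k.
Proof.
  unfold interleave; replace (S (2 * k)) with (2 * k + 1)%nat by lia.
  rewrite Nat.even_odd; replace (2 * k + 1)%nat with (S (2 * k)) by lia.
  rewrite Nat.div2_succ_double; reflexivity.
Qed.

Lemma sum_interleave (g1 g2 : nat -> R) N :
  sum_f_R0 (interleave g1 g2) (S (2 * N)) = sum_f_R0 g1 N + sum_f_R0 g2 N.
Proof.
  induction N as [|N IH].
  - simpl; unfold interleave; simpl; lra.
  - replace (S (2 * S N)) with (S (S (S (2 * N)))) by lia.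
    change (sum_f_R0 (interleave g1 g2) (S (S (S (2 * N)))))
      with (sum_f_R0 (interleave g1 g2) (S (2 * N))
            + interleave g1 g2 (S (S (2 * N))) + interleave g1 g2 (S (S (S (2 * N))))).
    rewrite IH; replace (S (S (2 * N))) with (2 * S N)%nat by lia.
    rewrite interleave_double, interleave_succ_double; simpl; lra.
Qed.

Lemma negligible_union (S1 S2 : R -> Prop) :
  negligible S1 -> negligible S2 -> negligible (fun x => S1 x \/ S2 x).
Proof.
  intros H1 H2 eps Heps.
  destruct (H1 (eps / 2)) as [a1 [b1 [Hab1 [Hsum1 Hcov1]]]]; [lra|].
  destruct (H2 (eps / 2)) as [a2 [b2 [Hab2 [Hsum2 Hcov2]]]]; [lra|].
  exists (interleave a1 a2), (interleave b1 b2); split; [|split].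
  - intros n; unfold interleave; destruct (Nat.even n); auto.
  - intros N.
    set (h := interleave (fun k => b1 k - a1 k) (fun k => b2 k - a2 k)).
    assert (Hh : forall n, interleave b1 b2 n - interleave a1 a2 n = h n).
    { intros n; unfold h, interleave; destruct (Nat.even n); reflexivity. }
    assert (Hpos : forall n, 0 <= h n).
    { intros n; unfold h, interleave; destruct (Nat.even n);
        [specialize (Hab1 (Nat.div2 n)) | specialize (Hab2 (Nat.div2 n))]; lra. }
    rewrite (sum_eq _ _ N (fun n _ => Hh n)).
    apply Rle_trans with (sum_f_R0 h (N + S N)); [now apply sum_f_R0_le_add|].
    replace (N + S N)%nat with (S (2 * N)) by lia.
    unfold h; rewrite sum_interleave; specialize (Hsum1 N); specialize (Hsum2 N); lra.
  - intros x [Hx|Hx].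
    + destruct (Hcov1 x Hx) as [n Hn]; exists (2 * n)%nat.
      now rewrite !interleave_double.
    + destruct (Hcov2 x Hx) as [n Hn]; exists (S (2 * n)).
      now rewrite !interleave_succ_double.
Qed.

Lemma negligible_singleton (c : R) : negligible (fun x => x = c).
Proof.
  intros eps Heps.
  exists (fun n => if Nat.eqb n 0 then c - eps / 4 else 0),
         (fun n => if Nat.eqb n 0 then c + eps / 4 else 0); split; [|split].
  - intros n; destruct (Nat.eqb n 0); lra.
  - assert (Hsum : forall N, sum_f_R0 (fun n => (if Nat.eqb n 0 then c + eps / 4 else 0)
                     - (if Nat.eqb n 0 then c - eps / 4 else 0)) N = eps / 2).
    { induction N as [|N IH]; simpl; [lra|]; rewrite IH; lra. }
    intros N; rewrite Hsum; lra.
  - intros x ->; exists 0%nat; simpl; lra.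
Qed.

Lemma ae_on_and a b (P Q : R -> Prop) :
  ae_on a b P -> ae_on a b Q -> ae_on a b (fun t => P t /\ Q t).
Proof.
  intros HP HQ.
  apply negligible_subset with
    (fun t => (a <= t <= b /\ ~ P t) \/ (a <= t <= b /\ ~ Q t)).
  - intros t [Ht HPQ]; destruct (classic (P t)); [right|left]; tauto.
  - now apply negligible_union.
Qed.

Lemma ae_on_sub (P Q : R -> Prop) a b c d :
  ae_on a b Q -> a <= c -> d <= b -> (forall t, c < t < d -> Q t -> P t) ->
  ae_on c d P.
Proof.
  intros HQ Hac Hdb HQP.
  apply negligible_subset with
    (fun t => (t = c \/ t = d) \/ (a <= t <= b /\ ~ Q t)).
  - intros t [Ht HnP].
    destruct (Req_dec t c); [now left; left|]; destruct (Req_dec t d); [now left; right|].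
    right; split; [lra|]; intro; apply HnP, HQP; auto; lra.
  - apply negligible_union; [apply negligible_union; apply negligible_singleton | exact HQ].
Qed.

(** * Absolutely continuous functions *)

Definition chain_length (l : list (R * R)) : R :=
  fold_right (fun cd acc => (snd cd - fst cd) + acc) 0 l.

Definition chain_variation (f : R -> R) (l : list (R * R)) : R :=
  fold_right (fun cd acc => Rabs (f (snd cd) - f (fst cd)) + acc) 0 l.

Lemma chain_in_le_l a a' b l : chain_in a b l -> a' <= a -> chain_in a' b l.
Proof. destruct l as [|[c d] l]; simpl; intros; intuition lra. Qed.

Lemma chain_in_le_r l a b b' : chain_in a b l -> b <= b' -> chain_in a b' l.
Proof.
  revert a; induction l as [|[c d] l IH]; simpl; intros a Hl Hb; [lra|].
  destruct Hl as [? [? ?]]; split; [lra|split; [lra|]]; eauto.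
Qed.

Lemma chain_variation_nonneg f l : 0 <= chain_variation f l.
Proof.
  induction l as [|cd l IH]; simpl; [lra|].
  pose proof (Rabs_pos (f (snd cd) - f (fst cd))); lra.
Qed.

Lemma AC_on_sub a b c d f : AC_on a b f -> a <= c -> d <= b -> AC_on c d f.
Proof.
  intros Hf Hac Hdb eps Heps; destruct (Hf eps Heps) as [del [Hdel Hvar]].
  exists del; split; auto; intros l Hl.
  apply Hvar; apply chain_in_le_r with d; auto; apply chain_in_le_l with c; auto.
Qed.

Lemma AC_on_plus a b f g :
  AC_on a b f -> AC_on a b g -> AC_on a b (fun x => f x + g x).
Proof.
  intros Hf Hg eps Heps.
  destruct (Hf (eps / 2)) as [d1 [Hd1 H1]]; [lra|].
  destruct (Hg (eps / 2)) as [d2 [Hd2 H2]]; [lra|].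
  exists (Rmin d1 d2); split; [now apply Rmin_glb_lt|]; intros l Hl Hlen.
  assert (V1 := H1 l Hl ltac:(pose proof (Rmin_l d1 d2); lra)).
  assert (V2 := H2 l Hl ltac:(pose proof (Rmin_r d1 d2); lra)).
  change (chain_variation (fun x => f x + g x) l < eps).
  change (chain_variation f l < eps / 2) in V1; change (chain_variation g l < eps / 2) in V2.
  enough (chain_variation (fun x => f x + g x) l <= chain_variation f l + chain_variation g l)
    by lra.
  clear; induction l as [|[c d] l IH]; simpl; [lra|].
  pose proof (Rabs_triang (f d - f c) (g d - g c)).
  replace (f d + g d - (f c + g c)) with (f d - f c + (g d - g c)) by ring; lra.
Qed.

Lemma AC_on_scal a b k f : AC_on a b f -> AC_on a b (fun x => k * f x).
Proof.
  intros Hf eps Heps.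
  assert (Hk : 0 < Rabs k + 1) by (pose proof (Rabs_pos k); lra).
  destruct (Hf (eps / (Rabs k + 1))) as [del [Hdel Hvar]];
    [now apply Rdiv_lt_0_compat|].
  exists del; split; auto; intros l Hl Hlen.
  assert (Hscal : chain_variation (fun x => k * f x) l = Rabs k * chain_variation f l).
  { clear; induction l as [|[c d] l IH]; simpl; [ring|].
    replace (k * f d - k * f c) with (k * (f d - f c)) by ring.
    rewrite Rabs_mult, IH; ring. }
  change (chain_variation (fun x => k * f x) l < eps); rewrite Hscal.
  assert (V := Hvar l Hl Hlen); change (chain_variation f l < eps / (Rabs k + 1)) in V.
  pose proof (chain_variation_nonneg f l); pose proof (Rabs_pos k).
  apply Rmult_lt_compat_l with (r := Rabs k + 1) in V; [|lra].
  replace ((Rabs k + 1) * (eps / (Rabs k + 1))) with eps in V by (field; lra); lra.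
Qed.

Lemma AC_on_id a b : AC_on a b (fun x => x).
Proof.
  intros eps Heps; exists eps; split; auto; intros l Hl Hlen.
  enough (chain_variation (fun x => x) l = chain_length l) by (unfold chain_variation, chain_length in *; lra).
  revert a Hl; clear; induction l as [|[c d] l IH]; simpl; intros a Hl; [lra|].
  destruct Hl as [? [? ?]]; rewrite Rabs_right by lra; rewrite (IH d); auto.
Qed.

Definition continuous_on (L U : R) (f : R -> R) : Prop :=
  forall x, L <= x <= U -> forall eps, 0 < eps -> exists del, 0 < del /\
    forall y, L <= y <= U -> Rabs (y - x) < del -> Rabs (f y - f x) < eps.

Lemma AC_on_continuous L U f : AC_on L U f -> continuous_on L U f.
Proof.
  intros Hf x Hx eps Heps; destruct (Hf eps Heps) as [del [Hdel Hvar]].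
  exists del; split; auto; intros y Hy Hyx; destruct (Rle_dec x y).
  - specialize (Hvar ((x, y) :: nil)); simpl in Hvar.
    enough (Rabs (f y - f x) + 0 < eps) by lra.
    apply Hvar; [lra|]; rewrite Rabs_right in Hyx; lra.
  - specialize (Hvar ((y, x) :: nil)); simpl in Hvar.
    rewrite Rabs_minus_sym; enough (Rabs (f x - f y) + 0 < eps) by lra.
    apply Hvar; [lra|]; rewrite Rabs_left in Hyx; lra.
Qed.

Lemma continuous_on_ext L U f g :
  (forall x, L <= x <= U -> f x = g x) -> continuous_on L U f -> continuous_on L U g.
Proof.
  intros Hfg Hf x Hx eps Heps; destruct (Hf x Hx eps Heps) as [del [Hdel Hc]].
  exists del; split; auto; intros y Hy Hyx; rewrite <- !Hfg; auto.
Qed.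

Lemma continuous_on_plus L U f g :
  continuous_on L U f -> continuous_on L U g -> continuous_on L U (fun x => f x + g x).
Proof.
  intros Hf Hg x Hx eps Heps.
  destruct (Hf x Hx (eps / 2)) as [d1 [Hd1 H1]]; [lra|].
  destruct (Hg x Hx (eps / 2)) as [d2 [Hd2 H2]]; [lra|].
  exists (Rmin d1 d2); split; [now apply Rmin_glb_lt|]; intros y Hy Hyx.
  specialize (H1 y Hy ltac:(pose proof (Rmin_l d1 d2); lra)).
  specialize (H2 y Hy ltac:(pose proof (Rmin_r d1 d2); lra)).
  replace (f y + g y - (f x + g x)) with (f y - f x + (g y - g x)) by ring.
  pose proof (Rabs_triang (f y - f x) (g y - g x)); lra.
Qed.

Lemma continuous_on_abs L U f : continuous_on L U f -> continuous_on L U (fun x => Rabs (f x)).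
Proof.
  intros Hf x Hx eps Heps; destruct (Hf x Hx eps Heps) as [del [Hdel Hc]].
  exists del; split; auto; intros y Hy Hyx; specialize (Hc y Hy Hyx).
  pose proof (Rabs_triang_inv2 (f y) (f x)); lra.
Qed.

Lemma continuous_on_scal L U k f : continuous_on L U f -> continuous_on L U (fun x => k * f x).
Proof.
  intros Hf x Hx eps Heps.
  assert (Hk : 0 < Rabs k + 1) by (pose proof (Rabs_pos k); lra).
  destruct (Hf x Hx (eps / (Rabs k + 1))) as [del [Hdel Hc]]; [now apply Rdiv_lt_0_compat|].
  exists del; split; auto; intros y Hy Hyx; specialize (Hc y Hy Hyx).
  replace (k * f y - k * f x) with (k * (f y - f x)) by ring; rewrite Rabs_mult.
  apply Rmult_lt_compat_l with (r := Rabs k + 1) in Hc; [|lra].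
  replace ((Rabs k + 1) * (eps / (Rabs k + 1))) with eps in Hc by (field; lra).
  pose proof (Rabs_pos (f y - f x)); nra.
Qed.

(** * Real induction and Cousin's lemma *)

Lemma real_induction (P : R -> Prop) a b : a <= b ->
  (forall x, a <= x <= b -> (forall y, a <= y < x -> P y) -> P x) ->
  (forall x, a <= x < b -> (forall y, a <= y <= x -> P y) ->
     exists h, 0 < h /\ forall y, x < y < x + h -> y <= b -> P y) ->
  forall x, a <= x <= b -> P x.
Proof.
  intros Hab Hleft Hright.
  set (S := fun x => a <= x <= b /\ forall y, a <= y <= x -> P y).
  assert (Pa : P a) by (apply Hleft; [lra | intros; lra]).
  assert (Sa : S a) by (split; [lra | intros y Hy; replace y with a by lra; auto]).
  destruct (completeness S) as [m [Hub Hlub]];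
    [exists b; intros x [Hx _]; lra | now exists a |].
  assert (Ham : a <= m) by (apply Hub, Sa).
  assert (Hmb : m <= b) by (apply Hlub; intros x [Hx _]; lra).
  assert (Pbelow : forall y, a <= y < m -> P y).
  { intros y Hy; apply NNPP; intro HnP.
    enough (m <= y) by lra.
    apply Hlub; intros x [Hx HPx]; destruct (Rle_dec x y); auto.
    exfalso; apply HnP, HPx; lra. }
  assert (Pupto : forall y, a <= y <= m -> P y).
  { intros y Hy; destruct (Req_dec y m) as [->|]; [apply Hleft; auto; lra | apply Pbelow; lra]. }
  destruct (Req_dec m b) as [<-|Hmb'].
  - intros x Hx; apply Pupto; lra.
  - exfalso; destruct (Hright m ltac:(lra) Pupto) as [h [Hh Hstep]].
    set (z := Rmin (m + h / 2) b).
    assert (m < z) by (apply Rmin_glb_lt; lra).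
    assert (z <= m + h / 2) by apply Rmin_l.
    assert (z <= b) by apply Rmin_r.
    enough (S z) by (specialize (Hub z H2); lra).
    split; [lra|]; intros y Hy; destruct (Rle_dec y m); [apply Pupto | apply Hstep]; lra.
Qed.

(* A [g]-fine tagged partition of [[c, d]] in the sense of gauge integration. *)
Fixpoint fine_partition (g : R -> R) (c d : R) (l : list (R * R * R)) : Prop :=
  match l with
  | nil => c = d
  | (lo, hi, tg) :: l' =>
      lo = c /\ lo < hi /\ lo <= tg <= hi /\ hi - lo < g tg /\ fine_partition g hi d l'
  end.

Definition pieces (l : list (R * R * R)) : list (R * R) :=
  map (fun p => (fst (fst p), snd (fst p))) l.

Lemma fine_partition_snoc g l c y x tg :
  fine_partition g c y l -> y < x -> y <= tg <= x -> x - y < g tg ->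
  fine_partition g c x (l ++ (y, x, tg) :: nil).
Proof.
  revert c; induction l as [|[[lo hi] t] l IH]; simpl; intros c Hl Hyx Htg Hg.
  - subst; repeat split; auto; lra.
  - destruct Hl as [? [? [? [? ?]]]]; repeat split; auto; tauto.
Qed.

Lemma cousin g c d : c <= d -> (forall t, c <= t <= d -> 0 < g t) ->
  exists l, fine_partition g c d l.
Proof.
  intros Hcd Hg.
  apply (real_induction (fun x => exists l, fine_partition g c x l) c d Hcd); [| |lra].
  - intros x Hx IH; destruct (Req_dec x c) as [->|Hxc]; [now exists nil|].
    assert (Hgx := Hg x Hx); set (y := Rmax c (x - g x / 2)).
    assert (y < x) by (apply Rmax_lub_lt; lra).
    assert (c <= y) by apply Rmax_l.
    assert (x - g x / 2 <= y) by apply Rmax_r.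
    destruct (IH y ltac:(lra)) as [l Hl].
    exists (l ++ (y, x, x) :: nil); apply fine_partition_snoc; auto; lra.
  - intros x Hx IH; exists (g x); split; [apply Hg; lra|]; intros y Hy Hyd.
    destruct (IH x ltac:(lra)) as [l Hl].
    exists (l ++ (x, y, x) :: nil); apply fine_partition_snoc; auto; lra.
Qed.

Lemma fine_partition_le g l c d : fine_partition g c d l -> c <= d.
Proof.
  revert c; induction l as [|[[lo hi] t] l IH]; simpl; intros c Hl; [lra|].
  destruct Hl as [? [? [? [? Hl]]]]; specialize (IH _ Hl); lra.
Qed.

Lemma fine_partition_chain g l c d : fine_partition g c d l -> chain_in c d (pieces l).
Proof.
  revert c; induction l as [|[[lo hi] t] l IH]; simpl; intros c Hl; [lra|].
  destruct Hl as [? [? [? [? ?]]]]; repeat split; auto; lra.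
Qed.

Lemma fine_partition_in g l c d p : fine_partition g c d l -> In p l ->
  c <= fst (fst p) /\ fst (fst p) <= snd p <= snd (fst p) /\
  snd (fst p) - fst (fst p) < g (snd p).
Proof.
  revert c; induction l as [|[[lo hi] t] l IH]; simpl; intros c Hl Hp; [contradiction|].
  destruct Hl as [? [? [? [? Hl]]]]; destruct Hp as [<-|Hp]; simpl; [lra|].
  destruct (IH _ Hl Hp); split; [lra | auto].
Qed.

Lemma fine_partition_in_range g l c d p : fine_partition g c d l -> In p l -> c <= snd p <= d.
Proof.
  revert c; induction l as [|[[lo hi] t] l IH]; simpl; intros c Hl Hp; [contradiction|].
  destruct Hl as [? [? [? [? Hl]]]]; pose proof (fine_partition_le _ _ _ _ Hl).
  destruct Hp as [<-|Hp]; simpl; [lra|]; specialize (IH _ Hl Hp); lra.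
Qed.

Lemma chain_in_filter (q : R * R * R -> bool) d l c :
  chain_in c d (pieces l) -> chain_in c d (pieces (filter q l)).
Proof.
  revert c; induction l as [|[[lo hi] t] l IH]; simpl; intros c Hl; auto.
  destruct Hl as [? [? ?]]; destruct (q (lo, hi, t)); simpl.
  - repeat split; auto.
  - apply chain_in_le_l with hi; auto; lra.
Qed.

Lemma chain_length_filter (q : R * R * R -> bool) l :
  chain_length (pieces l) =
  chain_length (pieces (filter q l)) + chain_length (pieces (filter (fun p => negb (q p)) l)).
Proof.
  induction l as [|p l IH]; simpl; [lra|]; unfold chain_length in *; simpl.
  destruct (q p); simpl; rewrite IH; ring.
Qed.

Lemma chain_length_inside A B d l c : chain_in c d (pieces l) ->
  (forall p, In p l -> A <= fst (fst p) /\ snd (fst p) <= B) ->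
  chain_length (pieces l) <= Rmax 0 (B - Rmax A c).
Proof.
  revert c; induction l as [|[[lo hi] t] l IH]; simpl; intros c Hl Hin.
  - apply Rmax_l.
  - destruct Hl as [? [? Hl]]; unfold chain_length in *; simpl.
    assert (H2 := Hin (lo, hi, t) (or_introl eq_refl)); simpl in H2.
    specialize (IH hi Hl (fun p Hp => Hin p (or_intror Hp))); revert IH.
    unfold Rmax; repeat destruct Rle_dec; intros; lra.
Qed.

Lemma chain_length_covered (a b : nat -> R) (idx : R -> nat) d M :
  (forall n, a n <= b n) ->
  forall l c, chain_in c d (pieces l) ->
  (forall p, In p l -> (idx (snd p) <= M)%nat /\
     a (idx (snd p)) <= fst (fst p) /\ snd (fst p) <= b (idx (snd p))) ->
  chain_length (pieces l) <= sum_f_R0 (fun n => b n - a n) M.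
Proof.
  intros Hab; induction M as [|M IH]; intros l c Hl Hin.
  - simpl; eapply Rle_trans; [apply (chain_length_inside (a 0%nat) (b 0%nat) d l c Hl)|].
    + intros p Hp; destruct (Hin p Hp) as [H1 H2]; now replace (idx (snd p)) with 0%nat in H2 by lia.
    + specialize (Hab 0%nat); unfold Rmax; repeat destruct Rle_dec; lra.
  - set (q := fun p : R * R * R => Nat.eqb (idx (snd p)) (S M)).
    rewrite (chain_length_filter q l); simpl.
    enough (chain_length (pieces (filter q l)) <= b (S M) - a (S M) /\
            chain_length (pieces (filter (fun p => negb (q p)) l))
              <= sum_f_R0 (fun n => b n - a n) M) by lra.
    split.
    + eapply Rle_trans;
        [apply (chain_length_inside (a (S M)) (b (S M)) d _ c); [now apply chain_in_filter|]|].
      * intros p Hp; apply filter_In in Hp; destruct Hp as [Hp Hq].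
        apply Nat.eqb_eq in Hq; destruct (Hin p Hp) as [_ H]; now rewrite Hq in H.
      * specialize (Hab (S M)); unfold Rmax; repeat destruct Rle_dec; lra.
    + apply IH with c; [now apply chain_in_filter|].
      intros p Hp; apply filter_In in Hp; destruct Hp as [Hp Hq].
      apply Bool.negb_true_iff, Nat.eqb_neq in Hq.
      destruct (Hin p Hp) as [H1 H2]; split; [lia | auto].
Qed.

Lemma variation_bound_on_partition g f (bad : R * R * R -> bool) eps d l c :
  0 <= eps -> fine_partition g c d l ->
  (forall p, In p l -> bad p = false ->
     Rabs (f (snd (fst p)) - f (fst (fst p))) <= eps * (snd (fst p) - fst (fst p))) ->
  Rabs (f d - f c) <= chain_variation f (pieces (filter bad l)) + eps * (d - c).
Proof.
  intros Heps; revert c; induction l as [|[[lo hi] t] l IH]; simpl; intros c Hl Hgood.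
  - subst; unfold chain_variation; simpl; rewrite Rminus_diag, Rabs_R0; lra.
  - destruct Hl as [-> [Hlh [Ht [Hg Hl]]]].
    pose proof (fine_partition_le _ _ _ _ Hl) as Hhd.
    specialize (IH hi Hl (fun p Hp => Hgood p (or_intror Hp))).
    pose proof (Rabs_triang (f d - f hi) (f hi - f c)).
    replace (f d - f hi + (f hi - f c)) with (f d - f c) in H by ring.
    destruct (bad (c, hi, t)) eqn:Hbad; unfold chain_variation in *; simpl.
    + assert (eps * (d - hi) <= eps * (d - c)) by (apply Rmult_le_compat_l; lra); lra.
    + specialize (Hgood (c, hi, t) (or_introl eq_refl) Hbad); simpl in Hgood; nra.
Qed.

(** * Absolutely continuous functions with a.e. vanishing derivative *)

Lemma derivative_zero_straddle f t eps :
  derivable_pt_lim f t 0 -> 0 < eps -> exists r, 0 < r /\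
    forall lo hi, lo <= t <= hi -> hi - lo < r -> Rabs (f hi - f lo) <= eps * (hi - lo).
Proof.
  intros Hder Heps; destruct (Hder eps Heps) as [r Hr].
  assert (Hloc : forall h, Rabs h < r -> Rabs (f (t + h) - f t) <= eps * Rabs h).
  { intros h Hh; destruct (Req_dec h 0) as [->|Hh0].
    - rewrite Rplus_0_r, Rminus_diag, !Rabs_R0; lra.
    - specialize (Hr h Hh0 Hh); rewrite Rminus_0_r in Hr.
      replace (f (t + h) - f t) with ((f (t + h) - f t) / h * h) by (field; auto).
      rewrite Rabs_mult; apply Rmult_le_compat_r; [apply Rabs_pos | lra]. }
  exists r; split; [apply cond_pos|]; intros lo hi Ht Hlen.
  assert (Hhi := Hloc (hi - t) ltac:(rewrite Rabs_right; lra)).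
  assert (Hlo := Hloc (lo - t) ltac:(rewrite Rabs_left1; lra)).
  replace (t + (hi - t)) with hi in Hhi by ring; replace (t + (lo - t)) with lo in Hlo by ring.
  rewrite (Rabs_right (hi - t)) in Hhi by lra; rewrite (Rabs_left1 (lo - t)) in Hlo by lra.
  pose proof (Rabs_triang (f hi - f t) (f t - f lo)).
  replace (f hi - f t + (f t - f lo)) with (f hi - f lo) in H by ring.
  rewrite (Rabs_minus_sym (f t)) in H; lra.
Qed.

Lemma le_eps_zero x K : 0 <= K -> (forall eps, 0 < eps -> Rabs x <= eps * K + eps) -> x = 0.
Proof.
  intros HK H; destruct (Req_dec x 0); auto; exfalso.
  assert (Hx : 0 < Rabs x) by (now apply Rabs_pos_lt).
  specialize (H (Rabs x / (2 * (K + 1))) ltac:(apply Rdiv_lt_0_compat; lra)).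
  replace (Rabs x / (2 * (K + 1)) * K + Rabs x / (2 * (K + 1))) with (Rabs x / 2) in H
    by (field; lra); lra.
Qed.

Definition tagged_in (E : R -> Prop) (p : R * R * R) : bool :=
  if excluded_middle_informative (E (snd p)) then true else false.

(* Near a point of [E] the gauge stays inside one of the covering intervals of
   total length [del / 2]. *)
Lemma negligible_fine_pieces (E : R -> Prop) del : negligible E -> 0 < del ->
  exists g, (forall t, 0 < g t) /\ forall l c d, chain_in c d (pieces l) ->
    (forall p, In p l -> E (snd p) /\ fst (fst p) <= snd p <= snd (fst p) /\
                         snd (fst p) - fst (fst p) < g (snd p)) ->
    chain_length (pieces l) < del.
Proof.
  intros HE Hdel; destruct (HE (del / 2) ltac:(lra)) as [a [b [Hab [Hsum Hcov]]]].
  destruct (choice (fun t n => E t -> a n < t < b n)) as [idx Hidx].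
  { intros t; destruct (classic (E t)) as [Et|Et];
      [destruct (Hcov t Et) as [n Hn]; now exists n | now exists 0%nat]. }
  exists (fun t => if excluded_middle_informative (E t)
                   then Rmin (t - a (idx t)) (b (idx t) - t) else 1); split.
  - intros t; destruct excluded_middle_informative as [Et|Et]; [|lra].
    destruct (Hidx t Et); apply Rmin_glb_lt; lra.
  - intros l c d Hl Hin.
    set (M := fold_right (fun p m => Nat.max (idx (snd p)) m) 0%nat l).
    assert (HM : forall p, In p l -> (idx (snd p) <= M)%nat).
    { unfold M; clear; induction l as [|q l IH]; simpl; intros p Hp; [contradiction|].
      destruct Hp as [<-|Hp]; [lia|]; specialize (IH p Hp); lia. }
    enough (chain_length (pieces l) <= sum_f_R0 (fun n => b n - a n) M)
      by (specialize (Hsum M); lra).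
    apply (chain_length_covered a b idx d M Hab l c Hl).
    intros p Hp; split; [now apply HM|].
    destruct (Hin p Hp) as [Et [Htag Hg]].
    destruct excluded_middle_informative; [|contradiction].
    pose proof (Rmin_l (snd p - a (idx (snd p))) (b (idx (snd p)) - snd p)).
    pose proof (Rmin_r (snd p - a (idx (snd p))) (b (idx (snd p)) - snd p)); lra.
Qed.

(* Take the gauge of [negligible_fine_pieces] at bad points and the radius of
   [derivative_zero_straddle] elsewhere: the bad pieces of a fine partition form
   a chain shorter than the modulus of absolute continuity. *)
Theorem AC_on_derivative_zero c d f : c <= d -> AC_on c d f ->
  ae_on c d (fun t => derivable_pt_lim f t 0) -> f c = f d.
Proof.
  intros Hcd Hac Hae.
  set (E := fun t => c <= t <= d /\ ~ derivable_pt_lim f t 0) in Hae.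
  enough (forall eps, 0 < eps -> Rabs (f d - f c) <= eps * (d - c) + eps)
    by (symmetry; apply Rminus_diag_uniq, (le_eps_zero _ (d - c)); auto; lra).
  intros eps Heps; destruct (Hac eps Heps) as [del [Hdel Hvar]].
  destruct (negligible_fine_pieces E del Hae Hdel) as [gE [HgE Hshort]].
  destruct (choice (fun t r => 0 < r /\ (~ E t -> c <= t <= d -> forall lo hi,
      lo <= t <= hi -> hi - lo < r -> Rabs (f hi - f lo) <= eps * (hi - lo)))) as [r Hr].
  { intros t; destruct (classic (~ E t /\ c <= t <= d)) as [[Et Ht]|HN].
    - destruct (derivative_zero_straddle f t eps) as [r Hr]; auto.
      + apply NNPP; intro; apply Et; split; auto.
      + exists r; tauto.
    - exists 1; split; [lra|]; tauto. }
  set (g := fun t => if excluded_middle_informative (E t) then gE t else r t).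
  destruct (cousin g c d Hcd) as [l Hl];
    [intros t _; unfold g; destruct excluded_middle_informative; [apply HgE | apply Hr]|].
  set (L := filter (tagged_in E) l).
  assert (Hbound : Rabs (f d - f c) <= chain_variation f (pieces L) + eps * (d - c)).
  { apply (variation_bound_on_partition g f (tagged_in E) eps d l c); [lra | auto|].
    intros [[lo hi] t] Hp Hb; simpl.
    destruct (fine_partition_in g l c d _ Hl Hp) as [_ [Ht Hg]]; simpl in Ht, Hg.
    unfold tagged_in in Hb; simpl in Hb; destruct excluded_middle_informative as [Et|Et];
      [discriminate|].
    unfold g in Hg; destruct excluded_middle_informative; [contradiction|].
    apply (proj2 (Hr t)); auto; apply (fine_partition_in_range g l c d _ Hl Hp). }
  enough (chain_variation f (pieces L) < eps) by lra.
  assert (Hchain : chain_in c d (pieces L))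
    by (apply chain_in_filter; eapply fine_partition_chain; eauto).
  apply Hvar; auto; apply (Hshort L c d Hchain).
  intros p Hp; apply filter_In in Hp; destruct Hp as [Hp Hb].
  destruct (fine_partition_in g l c d _ Hl Hp) as [_ [Ht Hg]].
  unfold tagged_in in Hb; destruct excluded_middle_informative as [Et|Et]; [|discriminate].
  unfold g in Hg; destruct excluded_middle_informative; [|contradiction]; auto.
Qed.

Corollary AC_on_derivative_const c d m f : c <= d -> AC_on c d f ->
  ae_on c d (fun t => derivable_pt_lim f t m) ->
  forall x, c <= x <= d -> f x = f c + m * (x - c).
Proof.
  intros Hcd Hac Hae x Hx.
  enough (f c + - m * c = f x + - m * x) by lra.
  apply (AC_on_derivative_zero c x (fun y => f y + - m * y)); [lra| |].
  - apply AC_on_plus; [apply AC_on_sub with c d; auto; lra|].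
    apply AC_on_scal, AC_on_id.
  - apply ae_on_sub with (fun t => derivable_pt_lim f t m) c d; auto; try lra.
    intros t _ Ht.
    replace 0 with (m + - m * 1) by ring.
    apply derivable_pt_lim_plus; auto.
    apply derivable_pt_lim_scal, derivable_pt_lim_id.
Qed.

Lemma interval_not_negligible c d : c < d -> ~ negligible (fun t => c <= t <= d).
Proof.
  intros Hcd Hneg.
  enough (c = d) by lra.
  apply (AC_on_derivative_zero c d (fun x => x)); [lra | apply AC_on_id|].
  apply negligible_subset with (fun t => c <= t <= d); auto; intros t [Ht _]; auto.
Qed.

Lemma ae_continuous_const T f v : 0 < T -> continuous_on 0 T f ->
  ae_on 0 T (fun t => f t = v) -> forall x, 0 <= x <= T -> f x = v.
Proof.
  intros HT Hf Hae x Hx; apply NNPP; intro Hne.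
  assert (Hgap : 0 < Rabs (f x - v)) by (apply Rabs_pos_lt; lra).
  destruct (Hf x Hx _ Hgap) as [del [Hdel Hc]].
  set (c := Rmax 0 (x - del / 2)); set (d := Rmin T (x + del / 2)).
  assert (0 <= c /\ x - del / 2 <= c /\ c <= x) as [Hc0 [Hc1 Hc2]]
    by (split; [apply Rmax_l | split; [apply Rmax_r | apply Rmax_lub; lra]]).
  assert (d <= T /\ d <= x + del / 2 /\ x <= d) as [Hd0 [Hd1 Hd2]]
    by (split; [apply Rmin_l | split; [apply Rmin_r | apply Rmin_glb; lra]]).
  assert (Hcd : c < d).
  { unfold c, d in *; revert Hc2 Hd2; unfold Rmax, Rmin; repeat destruct Rle_dec; intros; lra. }
  apply (interval_not_negligible c d Hcd).
  apply negligible_subset with (fun t => 0 <= t <= T /\ ~ f t = v); auto.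
  intros t Ht; split; [lra|]; intro Hv.
  specialize (Hc t ltac:(lra) ltac:(apply Rabs_def1; lra)).
  rewrite Hv, Rabs_minus_sym in Hc; lra.
Qed.

(** * Signs and one-sided continuity *)

Definition pm1 (s : R) : Prop := s = 1 \/ s = -1.

Definition sgn (r : R) : R := if Rlt_dec 0 r then 1 else -1.

Lemma sgn_pm1 r : pm1 (sgn r).
Proof. unfold sgn, pm1; destruct Rlt_dec; auto. Qed.

Lemma sgn_mul_pos r : r <> 0 -> 0 < sgn r * r.
Proof. unfold sgn; destruct Rlt_dec; intros; lra. Qed.

Lemma sgn_eq a b : 0 < a * b -> sgn a = sgn b.
Proof. unfold sgn; destruct (Rlt_dec 0 a), (Rlt_dec 0 b); intros; auto; nra. Qed.

Lemma sgn_neq a b : a * b < 0 -> sgn a <> sgn b.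
Proof. unfold sgn; destruct (Rlt_dec 0 a), (Rlt_dec 0 b); intros; lra || nra. Qed.

Lemma pm1_sqr s : pm1 s -> s * s = 1.
Proof. intros [-> | ->]; ring. Qed.

Lemma pm1_mul_abs s x : pm1 s -> 0 < s * x -> s * x = Rabs x.
Proof. intros [-> | ->] H; [rewrite Rabs_right | rewrite Rabs_left]; lra. Qed.

Lemma pm1_eq_of_mul_abs a x s : a * x = Rabs x -> pm1 s -> 0 < s * x -> a = s.
Proof.
  intros Hax Hs Hsx; rewrite <- (pm1_mul_abs s x Hs Hsx) in Hax.
  apply Rmult_eq_reg_r with x; [lra|]; intros ->; lra.
Qed.

Lemma mul_sgn_mul_pm1 a s : pm1 s -> a <> 0 -> a * sgn (a * s) = s * Rabs a.
Proof.
  intros [-> | ->] Ha; unfold sgn; destruct Rlt_dec;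
    destruct (Rcase_abs a); [rewrite Rabs_left | rewrite Rabs_right | rewrite Rabs_left
    | rewrite Rabs_right | rewrite Rabs_left | rewrite Rabs_right | rewrite Rabs_left
    | rewrite Rabs_right]; lra.
Qed.

Lemma continuous_on_affine L U K M t : continuous_on L U (fun y => K + M * (y - t)).
Proof.
  intros x Hx eps Heps.
  assert (HM : 0 < Rabs M + 1) by (pose proof (Rabs_pos M); lra).
  exists (eps / (Rabs M + 1)); split; [now apply Rdiv_lt_0_compat|]; intros y Hy Hyx.
  replace (K + M * (y - t) - (K + M * (x - t))) with (M * (y - x)) by ring.
  rewrite Rabs_mult; apply Rmult_lt_compat_l with (r := Rabs M + 1) in Hyx; [|lra].
  replace ((Rabs M + 1) * (eps / (Rabs M + 1))) with eps in Hyx by (field; lra).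
  pose proof (Rabs_pos (y - x)); lra.
Qed.

Lemma continuous_on_pos_near L U f z : continuous_on L U f -> L <= z <= U -> 0 < f z ->
  exists h, 0 < h /\ forall w, L <= w <= U -> Rabs (w - z) < h -> 0 < f w.
Proof.
  intros Hf Hz Hfz; destruct (Hf z Hz (f z) Hfz) as [h [Hh Hc]].
  exists h; split; auto; intros w Hw Hwz; specialize (Hc w Hw Hwz).
  pose proof (Rle_abs (f z - f w)); rewrite Rabs_minus_sym in Hc; lra.
Qed.

Lemma continuous_on_nonneg_left L U h t x : continuous_on L U h ->
  L <= t -> t < x -> x <= U -> (forall y, t <= y < x -> 0 <= h y) -> 0 <= h x.
Proof.
  intros Hh Ht Htx HxU Hy; apply Rnot_lt_le; intro Hneg.
  destruct (continuous_on_pos_near L U (fun w => - h w) x) as [d [Hd Hc]];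
    [now apply continuous_on_scal with (k := -1) in Hh;
     apply continuous_on_ext with (2 := Hh); intros; ring | lra | lra |].
  set (y := Rmax t (x - d / 2)).
  assert (t <= y) by apply Rmax_l; assert (x - d / 2 <= y) by apply Rmax_r.
  assert (y < x) by (apply Rmax_lub_lt; lra).
  specialize (Hc y ltac:(lra) ltac:(rewrite Rabs_left; lra)); specialize (Hy y ltac:(lra)); lra.
Qed.

Lemma continuous_on_eq_left L U f g t x : continuous_on L U f -> continuous_on L U g ->
  L <= t -> t < x -> x <= U -> (forall y, t <= y < x -> f y = g y) -> f x = g x.
Proof.
  intros Hf Hg Ht Htx HxU Hfg.
  assert (Hdiff : forall f g, continuous_on L U f -> continuous_on L U g ->
            (forall y, t <= y < x -> f y = g y) -> 0 <= f x - g x).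
  { clear Hf Hg Hfg; intros f' g' Hf Hg Hfg.
    apply (continuous_on_nonneg_left L U (fun w => f' w - g' w) t x); auto.
    - apply continuous_on_ext with (fun w => f' w + -1 * g' w); [intros; ring|].
      now apply continuous_on_plus, continuous_on_scal.
    - intros y Hy; rewrite Hfg; auto; lra. }
  pose proof (Hdiff f g Hf Hg Hfg).
  pose proof (Hdiff g f Hg Hf (fun y Hy => eq_sym (Hfg y Hy))); lra.
Qed.

Lemma continuous_on_sign_const L U f c d : continuous_on L U f -> L <= c -> d <= U ->
  (forall z, c < z < d -> f z <> 0) -> forall x y, c < x < d -> c < y < d -> 0 < f x * f y.
Proof.
  intros Hf Hc Hd Hnz.
  enough (Hle : forall x y, c < x < d -> c < y < d -> x <= y -> 0 < f x * f y).
  { intros x y Hx Hy; destruct (Rle_dec x y); [auto | rewrite Rmult_comm; apply Hle; auto; lra]. }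
  intros x y Hx Hy Hxy.
  assert (Hfx : f x <> 0) by (apply Hnz; lra).
  assert (Hg := continuous_on_scal L U (f x) f Hf).
  apply (real_induction (fun z => 0 < f x * f z) x y Hxy); [| |lra].
  - intros z Hz IH; destruct (Req_dec z x) as [->|Hzx]; [nra|].
    assert (f z <> 0) by (apply Hnz; lra).
    assert (0 <= f x * f z) by (apply (continuous_on_nonneg_left L U (fun w => f x * f w) x z);
                                  auto; try lra; intros w Hw; left; apply IH; lra).
    assert (f x * f z <> 0) by (apply Rmult_integral_contrapositive; auto); lra.
  - intros z Hz IH; destruct (continuous_on_pos_near L U _ z Hg) as [h [Hh Hpos]];
      [lra | apply IH; lra |].
    exists h; split; auto; intros w Hw Hwy; apply Hpos; [lra|]; rewrite Rabs_right; lra.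
Qed.

(** * Rotations on an l1-sphere *)

Definition follows_sign (L U : R) (F G : R -> R) (a : R) : Prop :=
  forall c d s, L <= c -> c <= d -> d <= U -> pm1 s ->
    (forall x, c < x < d -> 0 < s * F x) ->
    forall x, c <= x <= d -> G x = G c + a * s * (x - c).

(* The switching functions (phi1, phi2) will be an l1-rotation with [a = lambda_z]:
   on the sphere |phi1| + |phi2| = lambda_0 each coordinate moves with speed
   |lambda_z|, turning at every zero of the other coordinate. *)
Definition l1_rotation (L U : R) (F G : R -> R) (a Lam : R) : Prop :=
  continuous_on L U F /\ continuous_on L U G /\
  follows_sign L U F G a /\ follows_sign L U G F (- a) /\ a <> 0 /\
  forall x, L <= x <= U -> Rabs (F x) + Rabs (G x) = Lam.

Lemma l1_rotation_swap L U F G a Lam : l1_rotation L U F G a Lam -> l1_rotation L U G F (- a) Lam.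
Proof.
  intros [HF [HG [HFG [HGF [Ha HE]]]]]; repeat split; auto.
  - now rewrite Ropp_involutive.
  - lra.
  - intros x Hx; rewrite Rplus_comm; auto.
Qed.

Definition alternating_zeros (L U : R) (F G : R -> R) (e sp : R) : Prop :=
  (forall x, L < x <= U -> ((F x = 0 \/ G x = 0) <-> exists k : nat, x = e + INR k * sp)) /\
  (forall k : nat, e + INR (S k) * sp <= U ->
     (G (e + INR k * sp) = 0 <-> F (e + INR (S k) * sp) = 0) /\
     (F (e + INR k * sp) = 0 <-> G (e + INR (S k) * sp) = 0)).

Lemma alternating_zeros_swap L U F G e sp :
  alternating_zeros L U F G e sp -> alternating_zeros L U G F e sp.
Proof.
  intros [HZ HA]; split.
  - intros x Hx; rewrite <- (HZ x Hx); tauto.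
  - intros k Hk; specialize (HA k Hk); tauto.
Qed.

Section Rotation.
Variables L U Lam : R.

Lemma rotation_extend_right F G a t s z :
  l1_rotation L U F G a Lam -> L <= t -> t <= z < U -> pm1 s -> 0 <= G t * a * s ->
  (forall w, t <= w <= z -> G w = G t + a * s * (w - t) /\ F w = F t - s * Rabs a * (w - t)) ->
  0 < s * F z ->
  exists h, 0 < h /\ forall w, z < w < z + h -> w <= U ->
    G w = G t + a * s * (w - t) /\ F w = F t - s * Rabs a * (w - t).
Proof.
  intros [cF [cG [LG [LF [Ha _]]]]] Ht Hz Hs HG IH HFz.
  assert (Hss := pm1_sqr s Hs).
  destruct (continuous_on_pos_near L U (fun w => s * F w) z) as [del [Hdel Hnear]];
    [now apply continuous_on_scal | lra | auto |].
  set (d0 := z + Rmin del (U - z) / 2).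
  assert (Hd0 : z < d0 /\ d0 <= U /\ d0 - z < del)
    by (pose proof (Rmin_l del (U - z)); pose proof (Rmin_r del (U - z));
        assert (0 < Rmin del (U - z)) by (apply Rmin_glb_lt; lra); unfold d0; lra).
  assert (HsF : forall w, t < w < d0 -> 0 < s * F w).
  { intros w Hw; destruct (Rle_dec w z).
    - assert (s * F w = s * F t - Rabs a * (w - t))
        by (rewrite (proj2 (IH w ltac:(lra))); replace (s * (F t - s * Rabs a * (w - t)))
              with (s * F t - (s * s) * Rabs a * (w - t)) by ring; rewrite Hss; ring).
      assert (s * F z = s * F t - Rabs a * (z - t))
        by (rewrite (proj2 (IH z ltac:(lra))); replace (s * (F t - s * Rabs a * (z - t)))
              with (s * F t - (s * s) * Rabs a * (z - t)) by ring; rewrite Hss; ring).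
      assert (Rabs a * (w - t) <= Rabs a * (z - t)) by (apply Rmult_le_compat_l; [apply Rabs_pos | lra]).
      lra.
    - apply Hnear; [lra | rewrite Rabs_right; lra]. }
  assert (HGaff := LG t d0 s ltac:(lra) ltac:(lra) ltac:(lra) Hs HsF).
  set (tau := sgn (a * s)).
  assert (Has : a * s <> 0) by (apply Rmult_integral_contrapositive; split; auto; destruct Hs; lra).
  assert (Htau := sgn_mul_pos _ Has); assert (Htau1 : pm1 tau) by apply sgn_pm1.
  assert (HtG : 0 <= tau * G t) by (destruct Htau1 as [E|E]; fold tau in Htau; rewrite E in *; nra).
  assert (HtauG : forall w, t < w < d0 -> 0 < tau * G w)
    by (intros w Hw; rewrite HGaff by lra; fold tau in Htau; nra).
  assert (HFaff := LF t d0 tau ltac:(lra) ltac:(lra) ltac:(lra) Htau1 HtauG).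
  assert (Hslope : - a * tau = - s * Rabs a)
    by (pose proof (mul_sgn_mul_pm1 a s Hs Ha); unfold tau; lra).
  exists (d0 - z); split; [lra|]; intros w Hw HwU; split; [apply HGaff; lra|].
  rewrite HFaff, Hslope by lra; ring.
Qed.

(* [0 <= G t * a * s] says that |G| grows, hence |F| decreases, from time [t]. *)
Lemma rotation_quarter_turn F G a t s : l1_rotation L U F G a Lam -> L <= t <= U -> pm1 s ->
  0 < s * F t -> 0 <= G t * a * s ->
  forall x, t <= x <= U -> x <= t + s * F t / Rabs a ->
  G x = G t + a * s * (x - t) /\ F x = F t - s * Rabs a * (x - t).
Proof.
  intros HD Ht Hs HF HG x Hx Hxe.
  assert (Haw : 0 < Rabs a) by (apply Rabs_pos_lt; apply HD).
  assert (Hss := pm1_sqr s Hs).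
  set (e := t + s * F t / Rabs a) in *.
  assert (Hte : t < e) by (assert (0 < s * F t / Rabs a) by (apply Rdiv_lt_0_compat; auto); unfold e; lra).
  set (m := Rmin e U).
  assert (Hm : m <= e /\ m <= U /\ t <= m)
    by (split; [apply Rmin_l | split; [apply Rmin_r | apply Rmin_glb; lra]]).
  pose proof HD as [cF [cG _]].
  apply (real_induction (fun z => G z = G t + a * s * (z - t) /\ F z = F t - s * Rabs a * (z - t))
           t m ltac:(lra)); [| | split; [lra | apply Rmin_glb; lra]].
  - intros z Hz IH; destruct (Req_dec z t) as [->|Hzt]; [split; ring|].
    split.
    + apply (continuous_on_eq_left L U G (fun y => G t + a * s * (y - t)) t z);
        auto using continuous_on_affine; try lra; intros y Hy; apply IH; lra.
    + transitivity (F t + - (s * Rabs a) * (z - t)); [|ring].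
      apply (continuous_on_eq_left L U F (fun y => F t + - (s * Rabs a) * (y - t)) t z);
        auto using continuous_on_affine; try lra.
      intros y Hy; rewrite (proj2 (IH y Hy)); ring.
  - intros z Hz IH.
    destruct (rotation_extend_right F G a t s z) as [h [Hh Hext]]; auto; try lra.
    2: { exists h; split; auto; intros y Hy Hym; apply Hext; lra. }
    rewrite (proj2 (IH z ltac:(lra))).
    replace (s * (F t - s * Rabs a * (z - t))) with (s * F t - (s * s) * Rabs a * (z - t)) by ring.
    rewrite Hss.
    assert (z - t < s * F t / Rabs a) by (unfold e in Hm; lra).
    apply Rmult_lt_compat_l with (r := Rabs a) in H; auto.
    replace (Rabs a * (s * F t / Rabs a)) with (s * F t) in H by (field; lra); lra.
Qed.

Lemma rotation_no_zero_before F G a t s : l1_rotation L U F G a Lam -> L <= t <= U -> pm1 s ->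
  0 < s * F t -> 0 <= G t * a * s ->
  forall x, t < x <= U -> x < t + s * F t / Rabs a -> F x <> 0 /\ G x <> 0.
Proof.
  intros HD Ht Hs HF HG x Hx Hxe.
  destruct (rotation_quarter_turn F G a t s HD Ht Hs HF HG x ltac:(lra) ltac:(lra)) as [EG EF].
  assert (Ha : a <> 0) by apply HD.
  assert (Haw : 0 < Rabs a) by (now apply Rabs_pos_lt).
  assert (Hss := pm1_sqr s Hs).
  assert (Hlt : Rabs a * (x - t) < s * F t).
  { apply Rmult_lt_compat_l with (r := Rabs a) in Hxe; auto.
    replace (Rabs a * (t + s * F t / Rabs a)) with (Rabs a * t + s * F t) in Hxe by (field; lra).
    lra. }
  assert (Has : 0 < (a * s) * (a * s))
    by (assert (a * s <> 0) by (apply Rmult_integral_contrapositive; split; auto; destruct Hs; lra);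
        nra).
  split; intro H0; [rewrite H0 in EF | rewrite H0 in EG]; nra.
Qed.

Lemma rotation_zero_at F G a t s : l1_rotation L U F G a Lam -> L <= t <= U -> pm1 s ->
  0 < s * F t -> 0 <= G t * a * s -> t + s * F t / Rabs a <= U ->
  F (t + s * F t / Rabs a) = 0.
Proof.
  intros HD Ht Hs HF HG He.
  assert (Haw : 0 < Rabs a) by (apply Rabs_pos_lt; apply HD).
  assert (0 < s * F t / Rabs a) by (now apply Rdiv_lt_0_compat).
  destruct (rotation_quarter_turn F G a t s HD Ht Hs HF HG (t + s * F t / Rabs a))
    as [_ ->]; try lra.
  replace (F t - s * Rabs a * (t + s * F t / Rabs a - t)) with (F t - (s * s) * F t) by (field; lra).
  rewrite (pm1_sqr s Hs); ring.
Qed.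

Lemma l1_rotation_radius_pos F G a t : l1_rotation L U F G a Lam -> L <= t <= U ->
  F t <> 0 -> 0 < Lam.
Proof.
  intros [_ [_ [_ [_ [_ HE]]]]] Ht HFt; rewrite <- (HE t Ht).
  pose proof (Rabs_pos (G t)); pose proof (Rabs_pos_lt (F t) HFt); lra.
Qed.

Lemma rotation_zeros_first F G a t s : l1_rotation L U F G a Lam -> L <= t <= U -> pm1 s ->
  0 < s * F t -> 0 <= G t * a * s ->
  let e := t + s * F t / Rabs a in let sp := Lam / Rabs a in
  forall x, t < x <= U -> x <= e ->
  ((F x = 0 \/ G x = 0) <-> exists k : nat, x = e + INR k * sp) /\
  (forall k : nat, x = e + INR k * sp ->
     (Nat.even k = true -> F x = 0) /\ (Nat.even k = false -> G x = 0)).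
Proof.
  intros HD Ht Hs HF HG e sp x Hx Hxe.
  assert (Hsp : 0 < sp).
  { apply Rdiv_lt_0_compat; [|apply Rabs_pos_lt, HD].
    apply (l1_rotation_radius_pos F G a t HD Ht); intros E; rewrite E in HF; lra. }
  assert (Hgrid : forall k : nat, x = e + INR k * sp -> x = e /\ k = 0%nat).
  { intros k Hk; pose proof (pos_INR k).
    assert (INR k = 0) by nra; split; [nra | now apply INR_eq]. }
  destruct (Req_dec x e) as [-> | Hne].
  - assert (HFe : F e = 0) by (apply (rotation_zero_at F G a t s); auto; fold e; lra).
    split; [split; [intros _; exists 0%nat; simpl; ring | now left]|].
    intros k Hk; destruct (Hgrid k Hk) as [_ ->]; split; [auto | discriminate].
  - destruct (rotation_no_zero_before F G a t s HD Ht Hs HF HG x Hx ltac:(fold e; lra)).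
    split; [split; [tauto | intros [k Hk]; destruct (Hgrid k Hk); contradiction]|].
    intros k Hk; destruct (Hgrid k Hk); contradiction.
Qed.

(* After the first zero [e] of [F] the roles of [F] and [G] swap, and the next
   zero comes [Lam / |a|] later, the time needed to cross a side of the sphere. *)
Lemma rotation_zeros_upto n F G a t s : l1_rotation L U F G a Lam -> L <= t <= U -> pm1 s ->
  0 < s * F t -> 0 <= G t * a * s ->
  let e := t + s * F t / Rabs a in let sp := Lam / Rabs a in
  forall x, t < x <= U -> x < e + INR n * sp ->
  ((F x = 0 \/ G x = 0) <-> exists k : nat, x = e + INR k * sp) /\
  (forall k : nat, x = e + INR k * sp ->
     (Nat.even k = true -> F x = 0) /\ (Nat.even k = false -> G x = 0)).
Proof.
  revert F G a t s; induction n as [|n IH]; intros F G a t s HD Ht Hs HF HG e sp x Hx Hxn.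
  { apply rotation_zeros_first; auto; simpl in Hxn; fold e sp; lra. }
  destruct (Rle_dec x e) as [Hxe | Hxe]; [now apply rotation_zeros_first|].
  assert (Hte : t < e)
    by (assert (0 < s * F t / Rabs a) by (apply Rdiv_lt_0_compat; [|apply Rabs_pos_lt, HD]; auto);
        unfold e; lra).
  assert (HFe : F e = 0) by (apply (rotation_zero_at F G a t s); auto; fold e; lra).
  assert (HGe : Rabs (G e) = Lam)
    by (destruct HD as [_ [_ [_ [_ [_ HE]]]]]; rewrite <- (HE e ltac:(lra)), HFe, Rabs_R0; ring).
  set (s' := sgn (G e)).
  assert (HLam : 0 < Lam)
    by (apply (l1_rotation_radius_pos F G a t HD Ht); intros E; rewrite E in HF; lra).
  assert (Hs'G : 0 < s' * G e) by (apply sgn_mul_pos; intros E; rewrite E, Rabs_R0 in HGe; lra).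
  assert (He' : e + s' * G e / Rabs (- a) = e + sp)
    by (rewrite Rabs_Ropp, (pm1_mul_abs s' (G e) (sgn_pm1 _) Hs'G), HGe; reflexivity).
  assert (Hsp' : Lam / Rabs (- a) = sp) by (rewrite Rabs_Ropp; reflexivity).
  destruct (IH G F (- a) e s' (l1_rotation_swap _ _ _ _ _ _ HD) ltac:(lra) (sgn_pm1 _) Hs'G
              ltac:(rewrite HFe; lra) x ltac:(lra)) as [IH1 IH2];
    rewrite He', Hsp' in *; [rewrite S_INR in Hxn; lra|].
  split; [split|].
  - intros Hz; destruct (proj1 IH1 ltac:(tauto)) as [k Hk]; exists (S k); rewrite S_INR; lra.
  - intros [[|k] Hk]; [simpl in Hk; lra|].
    enough (G x = 0 \/ F x = 0) by tauto.
    apply IH1; exists k; rewrite S_INR in Hk; lra.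
  - intros [|k] Hk; [simpl in Hk; lra|].
    rewrite S_INR in Hk; destruct (IH2 k ltac:(lra)) as [P1 P2].
    rewrite Nat.even_succ, <- Nat.negb_even; destruct (Nat.even k); simpl; split;
      intros; try discriminate; auto.
Qed.

Lemma rotation_zero_set F G a s : l1_rotation L U F G a Lam -> L <= U -> pm1 s ->
  0 < s * F L -> 0 <= G L * a * s ->
  exists e sp, L < e <= L + sp /\ alternating_zeros L U F G e sp.
Proof.
  intros HD HLU Hs HF HG.
  assert (Haw : 0 < Rabs a) by (apply Rabs_pos_lt; apply HD).
  assert (HE : forall x, L <= x <= U -> Rabs (F x) + Rabs (G x) = Lam) by apply HD.
  assert (HFL : s * F L <= Lam)
    by (rewrite (pm1_mul_abs s _ Hs HF), <- (HE L ltac:(lra)); pose proof (Rabs_pos (G L)); lra).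
  set (e := L + s * F L / Rabs a); set (sp := Lam / Rabs a).
  assert (He : L < e <= L + sp).
  { unfold e, sp; split; [assert (0 < s * F L / Rabs a) by (now apply Rdiv_lt_0_compat); lra|].
    apply Rplus_le_compat_l, Rmult_le_compat_r; [left; now apply Rinv_0_lt_compat | lra]. }
  assert (Zeros : forall x, L < x <= U ->
     ((F x = 0 \/ G x = 0) <-> exists k : nat, x = e + INR k * sp) /\
     (forall k : nat, x = e + INR k * sp ->
        (Nat.even k = true -> F x = 0) /\ (Nat.even k = false -> G x = 0))).
  { intros x Hx; destruct (INR_archimed sp (x - e)) as [n Hn];
      [unfold sp; apply Rdiv_lt_0_compat; lra|].
    apply (rotation_zeros_upto n F G a L s HD ltac:(lra) Hs HF HG x Hx); fold e sp; lra. }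
  exists e, sp; split; [auto | split; [intros x Hx; apply Zeros; auto|]].
  intros k Hk.
  assert (Hsp : 0 < sp) by lra.
  assert (Hk0 : L < e + INR k * sp <= U)
    by (pose proof (pos_INR k); rewrite S_INR in Hk; nra).
  assert (Hk1 : L < e + INR (S k) * sp <= U) by (pose proof (pos_INR (S k)); nra).
  assert (NoCommon : forall x, L <= x <= U -> ~ (F x = 0 /\ G x = 0))
    by (intros x Hx [E1 E2]; pose proof (HE x Hx); rewrite E1, E2, Rabs_R0 in H; lra).
  destruct (Zeros _ Hk0) as [_ P0]; destruct (Zeros _ Hk1) as [_ P1].
  specialize (P0 k eq_refl); specialize (P1 (S k) eq_refl).
  pose proof (NoCommon _ (conj (Rlt_le _ _ (proj1 Hk0)) (proj2 Hk0))).
  pose proof (NoCommon _ (conj (Rlt_le _ _ (proj1 Hk1)) (proj2 Hk1))).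
  rewrite Nat.even_succ, <- Nat.negb_even in P1.
  destruct (Nat.even k); simpl in P1; destruct P0 as [P0a P0b]; destruct P1 as [P1a P1b].
  - specialize (P0a eq_refl); specialize (P1b eq_refl); tauto.
  - specialize (P0b eq_refl); specialize (P1a eq_refl); tauto.
Qed.

Lemma l1_rotation_zero_set F G a : l1_rotation L U F G a Lam -> L <= U -> 0 < Lam ->
  exists e sp, L < e <= L + sp /\ alternating_zeros L U F G e sp.
Proof.
  intros HD HLU HLam.
  assert (HE : Rabs (F L) + Rabs (G L) = Lam) by (apply HD; lra).
  assert (Hswap : forall s, pm1 s -> 0 < s * G L -> 0 <= F L * - a * s ->
            exists e sp, L < e <= L + sp /\ alternating_zeros L U F G e sp).
  { intros s Hs HG HF.
    destruct (rotation_zero_set G F (- a) s (l1_rotation_swap _ _ _ _ _ _ HD) HLU Hs HG HF)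
      as [e [sp [He HZ]]].
    exists e, sp; split; auto; now apply alternating_zeros_swap. }
  destruct (Req_dec (F L) 0) as [HF0 | HF0].
  - assert (HG0 : G L <> 0) by (intros E; rewrite HF0, E, Rabs_R0 in HE; lra).
    apply (Hswap (sgn (G L))); [apply sgn_pm1 | now apply sgn_mul_pos | rewrite HF0; lra].
  - destruct (Rle_dec 0 (G L * a * sgn (F L))) as [HG | HG].
    + apply (rotation_zero_set F G a (sgn (F L))); auto; [apply sgn_pm1 | now apply sgn_mul_pos].
    + assert (HG0 : G L <> 0) by (intros E; apply HG; rewrite E; lra).
      apply (Hswap (sgn (G L))); [apply sgn_pm1 | now apply sgn_mul_pos|].
      pose proof (sgn_mul_pos _ HF0); pose proof (sgn_mul_pos _ HG0).
      assert (0 < a * a) by (assert (a <> 0) by apply HD; nra).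
      assert (0 < (sgn (F L) * F L) * (sgn (G L) * G L) * (a * a))
        by (apply Rmult_lt_0_compat; auto; now apply Rmult_lt_0_compat).
      assert ((G L * a * sgn (F L)) * (F L * - a * sgn (G L))
              = - ((sgn (F L) * F L) * (sgn (G L) * G L) * (a * a))) by ring.
      nra.
Qed.
End Rotation.

(* At a zero [J] of [f], [g] is nonzero and keeps its sign nearby, so [f] is
   affine through [J] and changes sign there. *)
Lemma sign_change_iff_zero L U f g a c J d s1 s2 : L <= c -> c < J -> J < d -> d <= U ->
  continuous_on L U f -> continuous_on L U g -> follows_sign L U g f a ->
  (forall x, c < x < J -> f x <> 0) -> (forall x, J < x < d -> f x <> 0) ->
  (forall x, c < x < J -> sgn (f x) = s1) -> (forall x, J < x < d -> sgn (f x) = s2) ->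
  ~ (f J = 0 /\ g J = 0) -> (s1 <> s2 <-> f J = 0).
Proof.
  intros Hc HcJ HJd Hd Cf Cg Hfollow Nf1 Nf2 S1 S2 NB; split.
  - intros Hne; apply NNPP; intro HfJ; apply Hne.
    assert (Nz : forall z, c < z < d -> f z <> 0).
    { intros z Hz; destruct (Rtotal_order z J) as [H|[->|H]]; auto; [apply Nf1 | apply Nf2]; lra. }
    rewrite <- (S1 ((c + J) / 2)), <- (S2 ((J + d) / 2)) by lra.
    apply sgn_eq, (continuous_on_sign_const L U f c d); auto; lra.
  - intros HfJ.
    assert (HgJ : g J <> 0) by (intros E; apply NB; auto).
    set (sg := sgn (g J)).
    destruct (continuous_on_pos_near L U (fun x => sg * g x) J) as [del [Hdel Hpos]];
      [now apply continuous_on_scal | lra | now apply sgn_mul_pos |].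
    set (h := Rmin del (Rmin (J - c) (d - J)) / 2).
    assert (Hh : 0 < h /\ h < del /\ h < J - c /\ h < d - J).
    { pose proof (Rmin_l del (Rmin (J - c) (d - J))); pose proof (Rmin_r del (Rmin (J - c) (d - J))).
      pose proof (Rmin_l (J - c) (d - J)); pose proof (Rmin_r (J - c) (d - J)).
      assert (0 < Rmin del (Rmin (J - c) (d - J))) by (repeat apply Rmin_glb_lt; lra).
      unfold h; lra. }
    assert (Haff := Hfollow (J - h) (J + h) sg ltac:(lra) ltac:(lra) ltac:(lra) (sgn_pm1 _)
                     (fun x Hx => Hpos x ltac:(lra) ltac:(apply Rabs_def1; lra))).
    assert (Hsym : f (J + h) = - f (J - h)).
    { pose proof (Haff J ltac:(lra)) as EJ; pose proof (Haff (J + h) ltac:(lra)) as EJh.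
      rewrite HfJ in EJ; lra. }
    assert (Hfh : f (J - h) <> 0) by (apply Nf1; lra).
    rewrite <- (S1 (J - h)), <- (S2 (J + h)) by lra.
    apply sgn_neq; rewrite Hsym; nra.
Qed.

(** * Partitioning [[0, T]] at the points of a progression *)

Definition grid (e sp T : R) (n i : nat) : R :=
  match i with 0%nat => 0 | S j => if (j <? n)%nat then e + INR j * sp else T end.

Lemma grid_count e sp T : 0 < sp ->
  exists n, (forall k, (k < n)%nat -> e + INR k * sp < T) /\ T <= e + INR n * sp.
Proof.
  intros Hsp; destruct (INR_archimed sp (T - e) Hsp) as [m Hm].
  destruct (dec_inh_nat_subset_has_unique_least_element (fun n => T <= e + INR n * sp))
    as [n [[Hn Hleast] _]]; [intros n; apply classic | exists m; lra |].
  exists n; split; auto; intros k Hk; apply Rnot_le_lt; intros Hk'; specialize (Hleast k Hk'); lia.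
Qed.

Section Grid.
Variables (e sp T : R) (n : nat).
Hypotheses (e_pos : 0 < e) (e_le_sp : e <= sp) (T_pos : 0 < T).
Hypothesis grid_below : forall k, (k < n)%nat -> e + INR k * sp < T.
Hypothesis grid_cover : T <= e + INR n * sp.

Lemma grid_S j : (j < n)%nat -> grid e sp T n (S j) = e + INR j * sp.
Proof. intros Hj; simpl; now replace (j <? n)%nat with true by (symmetry; apply Nat.ltb_lt, Hj). Qed.

Lemma grid_last : grid e sp T n (S n) = T.
Proof. simpl; now rewrite Nat.ltb_irrefl. Qed.

Lemma grid_pos k : 0 <= INR k * sp.
Proof. apply Rmult_le_pos; [apply pos_INR | lra]. Qed.

Lemma grid_cases i : (i <= n)%nat ->
  (grid e sp T n (S i) = T \/ (i < n)%nat /\ grid e sp T n (S i) = e + INR i * sp) /\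
  (i = 0%nat /\ grid e sp T n i = 0 \/
   exists j, i = S j /\ (j < n)%nat /\ grid e sp T n i = e + INR j * sp).
Proof.
  intros Hi; split.
  - destruct (Nat.eq_dec i n) as [-> | Hin]; [left; apply grid_last | right; split; [lia | apply grid_S; lia]].
  - destruct i as [|j]; [now left | right; exists j; repeat split; [lia | apply grid_S; lia]].
Qed.

Lemma grid_increasing i : (i <= n)%nat ->
  0 <= grid e sp T n i /\ grid e sp T n i < grid e sp T n (S i) /\ grid e sp T n (S i) <= T.
Proof.
  intros Hi; destruct (grid_cases i Hi) as [[HS | [Hin HS]] [[-> H0] | [j [-> [Hj H0]]]]];
    rewrite HS, H0; try lra.
  - specialize (grid_below j Hj); pose proof (grid_pos j); lra.
  - specialize (grid_below 0%nat Hin); pose proof (grid_pos 0); lra.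
  - specialize (grid_below (S j) Hin); rewrite S_INR in *; pose proof (grid_pos j); lra.
Qed.

Lemma grid_avoids i x k : (i <= n)%nat -> grid e sp T n i < x < grid e sp T n (S i) ->
  x <> e + INR k * sp.
Proof.
  intros Hi Hx ->.
  assert (Hup : grid e sp T n (S i) <= e + INR i * sp).
  { destruct (Nat.eq_dec i n) as [Hin | Hin].
    - rewrite Hin, grid_last; exact grid_cover.
    - rewrite grid_S by lia; lra. }
  destruct i as [|j]; [change (INR 0) with 0 in Hup; pose proof (grid_pos k); lra|].
  rewrite grid_S in Hx by lia; rewrite S_INR in Hup.
  assert (INR j < INR k) by (apply Rmult_lt_reg_r with sp; lra).
  assert (INR k < INR (S j)) by (rewrite S_INR; apply Rmult_lt_reg_r with sp; lra).
  apply INR_lt in H; apply INR_lt in H0; lia.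
Qed.

Lemma grid_period i : (0 < i)%nat -> (i < n)%nat ->
  grid e sp T n (S i) - grid e sp T n i = sp.
Proof.
  intros Hi Hin; destruct i as [|j]; [lia|].
  rewrite !grid_S by lia; rewrite S_INR; ring.
Qed.

Lemma grid_first_le : grid e sp T n 1 - grid e sp T n 0 <= sp.
Proof.
  change (grid e sp T n 0) with 0.
  destruct (Nat.eq_dec n 0) as [Hn | Hn].
  - replace 1%nat with (S n) by lia; rewrite grid_last; rewrite Hn in grid_cover; simpl in grid_cover; lra.
  - rewrite grid_S by lia; simpl; lra.
Qed.

Lemma grid_last_le : grid e sp T n (S n) - grid e sp T n n <= sp.
Proof.
  rewrite grid_last; destruct (Nat.eq_dec n 0) as [Hn | Hn].
  - assert (grid e sp T n n = 0) as -> by (rewrite Hn; reflexivity).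
    rewrite Hn in grid_cover; simpl in grid_cover; lra.
  - pose proof (grid_S (pred n) ltac:(lia)) as G; rewrite Nat.succ_pred in G by lia.
    rewrite <- (Nat.succ_pred n Hn), S_INR in grid_cover; lra.
Qed.

Lemma grid_single : T <= e -> n = 0%nat.
Proof.
  intros HTe; destruct (Nat.eq_dec n 0); auto.
  specialize (grid_below 0%nat ltac:(lia)); simpl in grid_below; lra.
Qed.
End Grid.

(** * Extremals of the Heisenberg structure *)

Lemma derivable_pt_lim_affine_unique F x d K m :
  (forall s, F s = K + m * s) -> derivable_pt_lim F x d -> d = m.
Proof.
  intros HF Hd; apply (uniqueness_limite F x); auto.
  intros eps Heps; exists (mkposreal 1 Rlt_0_1); intros h Hh _; rewrite !HF.
  replace ((K + m * (x + h) - (K + m * x)) / h - m) with 0 by (field; auto).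
  rewrite Rabs_R0; auto.
Qed.

(* Here the Hamiltonian is affine in each canonical coordinate, so the partial
   derivatives in [hamiltonian_eqs] are determined. *)
Lemma hamiltonian_eqs_derivatives lam gam u t : hamiltonian_eqs lam gam u t ->
  derivable_pt_lim (fun s => coord 0 (lam s)) t (- (snd (u t) * coord 2 (lam t) / 2)) /\
  derivable_pt_lim (fun s => coord 1 (lam s)) t (fst (u t) * coord 2 (lam t) / 2) /\
  derivable_pt_lim (fun s => coord 2 (lam s)) t 0 /\
  derivable_pt_lim (fun s => coord 0 (gam s)) t (fst (u t)) /\
  derivable_pt_lim (fun s => coord 1 (gam s)) t (snd (u t)).
Proof.
  intros H.
  destruct (H 0%nat ltac:(lia)) as [[d0 [A0 B0]] [e0 [C0 D0]]].
  destruct (H 1%nat ltac:(lia)) as [[d1 [A1 B1]] [e1 [C1 D1]]].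
  destruct (H 2%nat ltac:(lia)) as [[d2 [A2 B2]] _].
  destruct (lam t) as [[a b] c], (gam t) as [[x y] z], (u t) as [w1 w2]; simpl in *.
  assert (d0 = w2 * c / 2) by (eapply derivable_pt_lim_affine_unique; [|exact A0];
    intro s; unfold Ham, pairing, X1, X2; simpl; instantiate (1 := w1 * (a * 1 + b * 0 + c * - (y / 2)) + w2 * (a * 0 + b * 1)); field).
  assert (d1 = - (w1 * c / 2)) by (eapply derivable_pt_lim_affine_unique; [|exact A1];
    intro s; unfold Ham, pairing, X1, X2; simpl; instantiate (1 := w1 * (a * 1 + b * 0) + w2 * (a * 0 + b * 1 + c * (x / 2))); field).
  assert (d2 = 0) by (eapply derivable_pt_lim_affine_unique; [|exact A2];
    intro s; unfold Ham, pairing, X1, X2; simpl; instantiate (1 := w1 * (a * 1 + b * 0 + c * - (y / 2)) + w2 * (a * 0 + b * 1 + c * (x / 2))); field).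
  assert (e0 = w1) by (eapply derivable_pt_lim_affine_unique; [|exact C0];
    intro s; unfold Ham, pairing, X1, X2; simpl; instantiate (1 := w1 * (b * 0 + c * - (y / 2)) + w2 * (b * 1 + c * (x / 2))); field).
  assert (e1 = w2) by (eapply derivable_pt_lim_affine_unique; [|exact C1];
    intro s; unfold Ham, pairing, X1, X2; simpl; instantiate (1 := w1 * (a * 1 + c * - (y / 2)) + w2 * (a * 0 + c * (x / 2))); field).
  subst; rewrite Ropp_involutive in B1; rewrite Ropp_0 in B2; repeat split; auto.
Qed.

Definition extremal_at (lam gam : R -> R3) (u : R -> R * R) (lam0 t : R) : Prop :=
  hamiltonian_eqs lam gam u t /\ (Rabs (fst (u t)) <= 1 /\ Rabs (snd (u t)) <= 1) /\
  (Ham (lam t) (gam t) (u t) = lam0 /\ Rabs (phi1 lam gam t) + Rabs (phi2 lam gam t) = lam0).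

Lemma extremal_pair_ae T lam gam u : extremal_pair T lam gam u -> exists lam0,
  (forall k, (k < 3)%nat -> AC_on 0 T (fun t => coord k (gam t))) /\
  (forall k, (k < 3)%nat -> AC_on 0 T (fun t => coord k (lam t))) /\
  ae_on 0 T (extremal_at lam gam u lam0).
Proof.
  intros [Hg [Hl [Hb [_ [Hh [lam0 [_ Hae]]]]]]]; exists lam0.
  split; [|split]; auto; apply ae_on_and; [|apply ae_on_and]; auto.
Qed.

Lemma extremal_at_control lam gam u lam0 t : extremal_at lam gam u lam0 t ->
  fst (u t) * phi1 lam gam t = Rabs (phi1 lam gam t) /\
  snd (u t) * phi2 lam gam t = Rabs (phi2 lam gam t).
Proof.
  intros [_ [[H1 H2] [H3 H4]]].
  change (Ham (lam t) (gam t) (u t)) with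
    (fst (u t) * phi1 lam gam t + snd (u t) * phi2 lam gam t) in H3.
  assert (Hle : forall w x, Rabs w <= 1 -> w * x <= Rabs x).
  { intros w x Hw; eapply Rle_trans; [apply Rle_abs|]; rewrite Rabs_mult.
    pose proof (Rabs_pos x); nra. }
  pose proof (Hle _ (phi1 lam gam t) H1); pose proof (Hle _ (phi2 lam gam t) H2); lra.
Qed.

Lemma phi1_formula lam gam t :
  phi1 lam gam t = coord 0 (lam t) + (- coord 2 (lam t) / 2) * coord 1 (gam t).
Proof. unfold phi1; destruct (lam t) as [[a b] c], (gam t) as [[x y] z]; simpl; field. Qed.

Lemma phi2_formula lam gam t :
  phi2 lam gam t = coord 1 (lam t) + (coord 2 (lam t) / 2) * coord 0 (gam t).
Proof. unfold phi2; destruct (lam t) as [[a b] c], (gam t) as [[x y] z]; simpl; field. Qed.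

Lemma derivable_pt_lim_comb f g k t df dg : derivable_pt_lim f t df -> derivable_pt_lim g t dg ->
  derivable_pt_lim (fun y => f y + k * g y) t (df + k * dg).
Proof.
  intros Hf Hg; exact (derivable_pt_lim_plus f (fun y => k * g y) t df (k * dg) Hf
                         (derivable_pt_lim_scal g k t dg Hg)).
Qed.

Section Switching.
Variables (T lam0 : R) (lam gam : R -> R3) (u : R -> R * R).
Hypothesis gam_AC : forall k, (k < 3)%nat -> AC_on 0 T (fun t => coord k (gam t)).
Hypothesis lam_AC : forall k, (k < 3)%nat -> AC_on 0 T (fun t => coord k (lam t)).
Hypothesis extremal_ae : ae_on 0 T (extremal_at lam gam u lam0).

Let p := coord 2 (lam 0).

Lemma lam_z_const x : 0 <= x <= T -> coord 2 (lam x) = p.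
Proof.
  intros Hx; symmetry; apply (AC_on_derivative_zero 0 x (fun t => coord 2 (lam t))); [lra| |].
  - apply AC_on_sub with 0 T; [apply lam_AC; lia | lra | lra].
  - apply ae_on_sub with (extremal_at lam gam u lam0) 0 T; auto; try lra.
    intros t _ [Hh _]; apply (hamiltonian_eqs_derivatives _ _ _ _ Hh).
Qed.

(* Each switching function is affine where it has a constant derivative
   [phi1' = - u2 lambda_z], [phi2' = u1 lambda_z]. *)
Lemma switching_affine (phi : R -> R) (i j : nat) (k : R) (v : R -> R) c d m :
  (i < 3)%nat -> (j < 3)%nat -> 0 <= c -> c <= d -> d <= T ->
  (forall y, 0 <= y <= T -> phi y = coord i (lam y) + k * coord j (gam y)) ->
  (forall t, extremal_at lam gam u lam0 t -> 0 <= t <= T ->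
     derivable_pt_lim (fun y => coord i (lam y) + k * coord j (gam y)) t (v t)) ->
  (forall t, c < t < d -> extremal_at lam gam u lam0 t -> v t = m) ->
  forall x, c <= x <= d -> phi x = phi c + m * (x - c).
Proof.
  intros Hi Hj Hc Hcd HdT Hphi Hder Hm x Hx; rewrite !Hphi by lra.
  apply (AC_on_derivative_const c d m (fun y => coord i (lam y) + k * coord j (gam y))); auto.
  - apply AC_on_sub with 0 T; try lra; apply AC_on_plus; [|apply AC_on_scal]; auto.
  - apply ae_on_sub with (extremal_at lam gam u lam0) 0 T; auto; try lra.
    intros t Ht Hext; rewrite <- (Hm t Ht Hext); apply Hder; auto; lra.
Qed.

Lemma phi1_affine c d m : 0 <= c -> c <= d -> d <= T ->
  (forall t, c < t < d -> extremal_at lam gam u lam0 t -> - (snd (u t) * p) = m) ->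
  forall x, c <= x <= d -> phi1 lam gam x = phi1 lam gam c + m * (x - c).
Proof.
  intros Hc Hcd HdT Hm.
  apply (switching_affine _ 0 1 (- p / 2) (fun t => - (snd (u t) * p)) c d m); auto; try lia.
  - intros y Hy; rewrite phi1_formula, lam_z_const; auto.
  - intros t [Hh _] Ht; destruct (hamiltonian_eqs_derivatives _ _ _ _ Hh) as [D0 [_ [_ [_ D1]]]].
    rewrite lam_z_const in D0 by auto.
    replace (- (snd (u t) * p)) with (- (snd (u t) * p / 2) + - p / 2 * snd (u t)) by field.
    now apply derivable_pt_lim_comb.
Qed.

Lemma phi2_affine c d m : 0 <= c -> c <= d -> d <= T ->
  (forall t, c < t < d -> extremal_at lam gam u lam0 t -> fst (u t) * p = m) ->
  forall x, c <= x <= d -> phi2 lam gam x = phi2 lam gam c + m * (x - c).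
Proof.
  intros Hc Hcd HdT Hm.
  apply (switching_affine _ 1 0 (p / 2) (fun t => fst (u t) * p) c d m); auto; try lia.
  - intros y Hy; rewrite phi2_formula, lam_z_const; auto.
  - intros t [Hh _] Ht; destruct (hamiltonian_eqs_derivatives _ _ _ _ Hh) as [_ [D0 [_ [D1 _]]]].
    rewrite lam_z_const in D0 by auto.
    replace (fst (u t) * p) with (fst (u t) * p / 2 + p / 2 * fst (u t)) by field.
    now apply derivable_pt_lim_comb.
Qed.

Lemma phi1_follows_phi2 : follows_sign 0 T (phi2 lam gam) (phi1 lam gam) (- p).
Proof.
  intros c d s Hc Hcd HdT Hs Hpos; apply phi1_affine; auto.
  intros t Ht Hext; destruct (extremal_at_control _ _ _ _ _ Hext) as [_ Hu2].
  rewrite (pm1_eq_of_mul_abs _ _ s Hu2 Hs (Hpos t Ht)); ring.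
Qed.

Lemma phi2_follows_phi1 : follows_sign 0 T (phi1 lam gam) (phi2 lam gam) p.
Proof.
  intros c d s Hc Hcd HdT Hs Hpos; apply phi2_affine; auto.
  intros t Ht Hext; destruct (extremal_at_control _ _ _ _ _ Hext) as [Hu1 _].
  rewrite (pm1_eq_of_mul_abs _ _ s Hu1 Hs (Hpos t Ht)); ring.
Qed.

Lemma phi1_continuous : continuous_on 0 T (phi1 lam gam).
Proof.
  apply continuous_on_ext with (fun y => coord 0 (lam y) + (- p / 2) * coord 1 (gam y)).
  - intros y Hy; rewrite phi1_formula, lam_z_const; auto.
  - apply AC_on_continuous, AC_on_plus; [|apply AC_on_scal]; auto.
Qed.

Lemma phi2_continuous : continuous_on 0 T (phi2 lam gam).
Proof.
  apply continuous_on_ext with (fun y => coord 1 (lam y) + (p / 2) * coord 0 (gam y)).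
  - intros y Hy; rewrite phi2_formula, lam_z_const; auto.
  - apply AC_on_continuous, AC_on_plus; [|apply AC_on_scal]; auto.
Qed.

Hypothesis T_pos : 0 < T.

Lemma switching_l1_norm x : 0 <= x <= T -> Rabs (phi1 lam gam x) + Rabs (phi2 lam gam x) = lam0.
Proof.
  apply (ae_continuous_const T (fun x => Rabs (phi1 lam gam x) + Rabs (phi2 lam gam x))); auto.
  - apply continuous_on_plus; apply continuous_on_abs; [apply phi1_continuous | apply phi2_continuous].
  - apply negligible_subset with (2 := extremal_ae).
    intros t [Ht Hn]; split; auto; intros [_ [_ [_ E]]]; auto.
Qed.

Hypothesis regular_point :
  exists t0, 0 <= t0 <= T /\ phi1 lam gam t0 <> 0 /\ phi2 lam gam t0 <> 0.

Lemma lam0_pos : 0 < lam0.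
Proof.
  destruct regular_point as [t0 [Ht0 [N1 N2]]]; rewrite <- (switching_l1_norm t0 Ht0).
  pose proof (Rabs_pos_lt _ N1); pose proof (Rabs_pos (phi2 lam gam t0)); lra.
Qed.

Lemma switching_no_common_zero x : 0 <= x <= T -> ~ (phi1 lam gam x = 0 /\ phi2 lam gam x = 0).
Proof.
  intros Hx [E1 E2]; pose proof (switching_l1_norm x Hx); pose proof lam0_pos.
  rewrite E1, E2, Rabs_R0 in H; lra.
Qed.

(* For [lambda_z = 0] both switching functions are constant, hence never vanish,
   and any [e > T] works. *)
Lemma switching_zero_set : exists e sp, 0 < e <= sp /\
  alternating_zeros 0 T (phi1 lam gam) (phi2 lam gam) e sp /\ (p = 0 -> T <= e).
Proof.
  destruct (Req_dec p 0) as [Hp0 | Hp0].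
  - destruct regular_point as [t0 [Ht0 [N1 N2]]].
    assert (K1 : forall x, 0 <= x <= T -> phi1 lam gam x = phi1 lam gam 0)
      by (intros x Hx; rewrite (phi1_affine 0 T 0 ltac:(lra) ltac:(lra) ltac:(lra)) by
            (auto || (intros; rewrite Hp0; ring)); ring).
    assert (K2 : forall x, 0 <= x <= T -> phi2 lam gam x = phi2 lam gam 0)
      by (intros x Hx; rewrite (phi2_affine 0 T 0 ltac:(lra) ltac:(lra) ltac:(lra)) by
            (auto || (intros; rewrite Hp0; ring)); ring).
    exists (2 * T), (2 * T); split; [lra | split; [split | intros; lra]].
    + intros x Hx; split.
      * rewrite K1, K2, <- (K1 t0), <- (K2 t0) by lra; tauto.
      * intros [k Hk]; pose proof (pos_INR k); nra.
    + intros k Hk; pose proof (pos_INR (S k)); nra.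
  - destruct (l1_rotation_zero_set 0 T lam0 (phi1 lam gam) (phi2 lam gam) p) as [e [sp [He HZ]]].
    + repeat split; auto using phi1_continuous, phi2_continuous, phi2_follows_phi1,
        phi1_follows_phi2, switching_l1_norm.
    + lra.
    + apply lam0_pos.
    + exists e, sp; split; [lra | split; auto; intros; contradiction].
Qed.

Section Arcs.
Variables (e sp : R) (n : nat).
Hypotheses (e_pos : 0 < e) (e_le_sp : e <= sp).
Hypothesis zeros : alternating_zeros 0 T (phi1 lam gam) (phi2 lam gam) e sp.
Hypothesis grid_below : forall k, (k < n)%nat -> e + INR k * sp < T.
Hypothesis grid_cover : T <= e + INR n * sp.

Let ts := grid e sp T n.

Lemma arc_bounds i : (i <= n)%nat -> 0 <= ts i /\ ts i < ts (S i) /\ ts (S i) <= T.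
Proof. intros Hi; now apply grid_increasing. Qed.

Lemma arc_regular i : (i <= n)%nat -> regular_on lam gam (ts i) (ts (S i)).
Proof.
  intros Hi x Hx; destruct (arc_bounds i Hi) as [B1 [B2 B3]].
  destruct (classic (phi1 lam gam x = 0 \/ phi2 lam gam x = 0)) as [Z | Z]; [exfalso | tauto].
  destruct (proj1 (proj1 zeros x ltac:(lra)) Z) as [k Hk].
  exact (grid_avoids e sp T n e_pos e_le_sp grid_cover i x k Hi Hx Hk).
Qed.

Lemma junction_zero j : (j < n)%nat -> phi1 lam gam (ts (S j)) = 0 \/ phi2 lam gam (ts (S j)) = 0.
Proof.
  intros Hj; destruct (arc_bounds j ltac:(lia)) as [B1 [B2 B3]].
  apply (proj1 zeros); [lra|]; exists j; unfold ts; now rewrite grid_S.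
Qed.

Lemma arc_maximal i : (i <= n)%nat -> maximal_regular_arc T lam gam (ts i) (ts (S i)).
Proof.
  intros Hi; destruct (arc_bounds i Hi) as [B1 [B2 B3]].
  split; [lra | split; [lra | split; [lra | split; [now apply arc_regular|]]]].
  intros a' b' Ha' Hb' Hreg.
  assert (NotInside : forall j, (j < n)%nat -> ~ (a' < ts (S j) < b'))
    by (intros j Hj Hin; destruct (Hreg _ Hin); destruct (junction_zero j Hj); contradiction).
  split.
  - destruct i as [|j]; [change (ts 0) with 0 in *; lra|].
    destruct (Req_dec a' (ts (S j))); auto; exfalso; apply (NotInside j); [lia | lra].
  - destruct (Nat.eq_dec i n) as [-> | Hin]; [unfold ts in *; rewrite grid_last in *; lra|].
    destruct (Req_dec b' (ts (S i))); auto; exfalso; apply (NotInside i); [lia | lra].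
Qed.

Definition arc_control (i : nat) : R * R :=
  let mid := (ts i + ts (S i)) / 2 in (sgn (phi1 lam gam mid), sgn (phi2 lam gam mid)).

Lemma arc_sign i x : (i <= n)%nat -> ts i < x < ts (S i) ->
  sgn (phi1 lam gam x) = fst (arc_control i) /\ sgn (phi2 lam gam x) = snd (arc_control i).
Proof.
  intros Hi Hx; destruct (arc_bounds i Hi) as [B1 [B2 B3]].
  unfold arc_control; cbv beta zeta iota delta [fst snd]; split; apply sgn_eq.
  - apply (continuous_on_sign_const 0 T _ (ts i) (ts (S i)) phi1_continuous); try lra.
    intros z Hz; apply (proj1 (arc_regular i Hi z Hz)).
  - apply (continuous_on_sign_const 0 T _ (ts i) (ts (S i)) phi2_continuous); try lra.
    intros z Hz; apply (proj2 (arc_regular i Hi z Hz)).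
Qed.

Lemma arc_control_ae i : (i <= n)%nat ->
  negligible (fun t => ts i < t < ts (S i) /\ u t <> arc_control i).
Proof.
  intros Hi; destruct (arc_bounds i Hi) as [B1 [B2 B3]].
  apply negligible_subset with (2 := extremal_ae); intros t [Ht Hut]; split; [lra|]; intros Hext.
  apply Hut; destruct (extremal_at_control _ _ _ _ _ Hext) as [U1 U2].
  destruct (arc_regular i Hi t Ht) as [N1 N2]; destruct (arc_sign i t Hi Ht) as [S1 S2].
  rewrite (surjective_pairing (u t)), (surjective_pairing (arc_control i)), <- S1, <- S2.
  f_equal; eapply pm1_eq_of_mul_abs; eauto using sgn_pm1, sgn_mul_pos.
Qed.

Lemma junction_switch j : (j < n)%nat ->
  (fst (arc_control j) <> fst (arc_control (S j)) <-> phi1 lam gam (ts (S j)) = 0) /\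
  (snd (arc_control j) <> snd (arc_control (S j)) <-> phi2 lam gam (ts (S j)) = 0).
Proof.
  intros Hj; destruct (arc_bounds j ltac:(lia)) as [B1 [B2 B3]].
  destruct (arc_bounds (S j) Hj) as [B4 [B5 B6]].
  pose proof (switching_no_common_zero (ts (S j)) ltac:(lra)) as NB.
  split.
  - apply (sign_change_iff_zero 0 T (phi1 lam gam) (phi2 lam gam) (- p) (ts j) (ts (S j))
             (ts (S (S j)))); auto using phi1_continuous, phi2_continuous, phi1_follows_phi2;
      try lra; intros x Hx.
    + apply (proj1 (arc_regular j ltac:(lia) x Hx)).
    + apply (proj1 (arc_regular (S j) Hj x Hx)).
    + apply (proj1 (arc_sign j x ltac:(lia) Hx)).
    + apply (proj1 (arc_sign (S j) x Hj Hx)).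
  - apply (sign_change_iff_zero 0 T (phi2 lam gam) (phi1 lam gam) p (ts j) (ts (S j))
             (ts (S (S j)))); auto using phi1_continuous, phi2_continuous, phi2_follows_phi1;
      try lra; try tauto; intros x Hx.
    + apply (proj2 (arc_regular j ltac:(lia) x Hx)).
    + apply (proj2 (arc_regular (S j) Hj x Hx)).
    + apply (proj2 (arc_sign j x ltac:(lia) Hx)).
    + apply (proj2 (arc_sign (S j) x Hj Hx)).
Qed.

Lemma junction_one_switch i : (0 < i)%nat -> (i < S n)%nat ->
  (fst (arc_control (pred i)) <> fst (arc_control i) <->
   snd (arc_control (pred i)) = snd (arc_control i)).
Proof.
  intros Hi HiN; destruct i as [|j]; [lia|]; simpl pred.
  destruct (arc_bounds j ltac:(lia)) as [B1 [B2 B3]].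
  pose proof (switching_no_common_zero (ts (S j)) ltac:(lra)) as NB.
  destruct (junction_switch j ltac:(lia)) as [F1 F2].
  destruct (junction_zero j ltac:(lia)); split; intros H'.
  - apply NNPP; intros Hne; apply F2 in Hne; tauto.
  - apply F1; auto.
  - apply F1 in H'; tauto.
  - exfalso; apply (proj2 F2 H); auto.
Qed.

Lemma junction_alternate i : (0 < i)%nat -> (S i < S n)%nat ->
  (fst (arc_control (pred i)) <> fst (arc_control i) <->
   fst (arc_control i) = fst (arc_control (S i))).
Proof.
  intros Hi HiN; destruct i as [|j]; [lia|]; simpl pred.
  destruct (arc_bounds (S j) ltac:(lia)) as [B1 [B2 B3]].
  assert (Halt : phi1 lam gam (ts (S j)) = 0 <-> phi2 lam gam (ts (S (S j))) = 0).
  { unfold ts in *; rewrite !grid_S in * by lia; apply (proj2 zeros j); lra. }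
  rewrite (proj1 (junction_switch j ltac:(lia))), Halt, <- (proj2 (junction_switch (S j) ltac:(lia))).
  pose proof (junction_one_switch (S (S j)) ltac:(lia) ltac:(lia)); simpl pred in H.
  split; intros H'; apply NNPP; intros H''; tauto.
Qed.
End Arcs.
End Switching.

Theorem mainTheorem4 (T : R) (lam gam : R -> R3) (u : R -> R * R) :
  extremal_pair T lam gam u ->
  (exists a b, 0 <= a < b /\ b <= T /\ regular_on lam gam a b) ->
  exists (N : nat) (ts : nat -> R) (c : nat -> R * R),
    (0 < N)%nat /\ ts 0%nat = 0 /\ ts N = T /\
    (forall i, (i < N)%nat -> ts i < ts (S i)) /\
    (forall i, (i < N)%nat ->
       maximal_regular_arc T lam gam (ts i) (ts (S i)) /\
       (fst (c i) = 1 \/ fst (c i) = -1) /\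
       (snd (c i) = 1 \/ snd (c i) = -1) /\
       negligible (fun t => ts i < t < ts (S i) /\ u t <> c i)) /\
    (exists s, 0 < s /\
       (forall i, (0 < i)%nat -> (S i < N)%nat -> ts (S i) - ts i = s) /\
       ts 1%nat - ts 0%nat <= s /\ ts N - ts (pred N) <= s) /\
    ((forall t, 0 <= t <= T -> coord 2 (lam t) = 0) -> N = 1%nat) /\
    (forall i, (0 < i)%nat -> (i < N)%nat ->
       (fst (c (pred i)) <> fst (c i) <-> snd (c (pred i)) = snd (c i))) /\
    (forall i, (0 < i)%nat -> (S i < N)%nat ->
       (fst (c (pred i)) <> fst (c i) <-> fst (c i) = fst (c (S i)))).
Proof.
  intros Hext [a [b [Hab [HbT Hreg]]]].
  destruct (extremal_pair_ae T lam gam u Hext) as [lam0 [HgAC [HlAC Hae]]].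
  assert (HT : 0 < T) by lra.
  assert (Ht0 : exists t0, 0 <= t0 <= T /\ phi1 lam gam t0 <> 0 /\ phi2 lam gam t0 <> 0)
    by (exists ((a + b) / 2); split; [lra | apply Hreg; lra]).
  destruct (switching_zero_set T lam0 lam gam u) as [e [sp [He [Hzeros Hflat]]]]; auto.
  destruct (grid_count e sp T ltac:(lra)) as [n [Hbelow Hcover]].
  exists (S n), (grid e sp T n), (arc_control T lam gam e sp n).
  split; [lia | split; [reflexivity | split; [apply grid_last | split]]].
  { intros i Hi; apply grid_increasing; auto; lra || lia. }
  split.
  { intros i Hi; split; [apply arc_maximal | split; [apply sgn_pm1 | split;
      [apply sgn_pm1 | apply (arc_control_ae T lam0)]]]; auto; lra || lia. }
  split.
  { exists sp; split; [lra | split; [intros; apply grid_period |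
      split; [apply grid_first_le | apply grid_last_le]]]; auto; lra || lia. }
  split; [intros Hz; f_equal; apply (grid_single e sp T n); auto; apply Hflat, Hz; lra|].
  split; intros i Hi HiN; [apply (junction_one_switch T lam0 lam gam u) | apply (junction_alternate T lam0 lam gam u)]; auto; lra.
Qed.
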